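(* Consider first-order logic in a language with a single binary relation symbol $E$ (besides equality), and let $\Gamma$ be a set of first-order sentences whose models are exactly the undirected graphs $(V,E)$ ($E$ irreflexive and symmetric) such that: (i) $(V,E)$ has no cycles; (ii) for every integer $k>0$, (a) there are at least $k$ vertices of degree $4$, and (b) every vertex $x$ whose distance to some vertex of degree $4$ equals $k$ has degree $3$. Then (1) every finite $\Delta\subseteq\Gamma$ has a rigid model, and (2) for every model $\mathcal M$ of $\Gamma$, $\mathrm{Aut}(\mathcal M)$ has a subgroup isomorphic to $S(\omega)$.
   Context: The degree of a vertex is the number of its neighbours; the distance between two vertices is the least number of edges on a path joining them. A structure is rigid if its only automorphism is the identity. $S(\omega)$ is the group of all permutations of $\omega=\{0,1,2,\dots\}$. *)

From Stdlib Require Import Arith List.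
Import ListNotations.

Inductive formula : Type :=
  | FEq  : nat -> nat -> formula
  | FRel : nat -> nat -> formula
  | FFalse : formula
  | FNot : formula -> formula
  | FAnd : formula -> formula -> formula
  | FOr  : formula -> formula -> formula
  | FImp : formula -> formula -> formula
  | FAll : nat -> formula -> formula
  | FEx  : nat -> formula -> formula.

Fixpoint free_in (x : nat) (phi : formula) : Prop :=
  match phi with
  | FEq i j | FRel i j => x = i \/ x = j
  | FFalse => False
  | FNot p => free_in x p
  | FAnd p q | FOr p q | FImp p q => free_in x p \/ free_in x q
  | FAll y p | FEx y p => x <> y /\ free_in x p
  end.

Definition sentence (phi : formula) : Prop := forall x, ~ free_in x phi.

Definition update {V : Type} (env : nat -> V) (n : nat) (v : V) : nat -> V :=
  fun m => if Nat.eqb m n then v else env m.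

Fixpoint sat {V : Type} (E : V -> V -> Prop) (env : nat -> V) (phi : formula)
  : Prop :=
  match phi with
  | FEq i j => env i = env j
  | FRel i j => E (env i) (env j)
  | FFalse => False
  | FNot p => ~ sat E env p
  | FAnd p q => sat E env p /\ sat E env q
  | FOr p q => sat E env p \/ sat E env q
  | FImp p q => sat E env p -> sat E env q
  | FAll n p => forall v : V, sat E (update env n v) p
  | FEx n p => exists v : V, sat E (update env n v) p
  end.

Definition is_model (V : Type) (E : V -> V -> Prop) (T : formula -> Prop)
  : Prop :=
  inhabited V /\ forall phi, T phi -> forall env : nat -> V, sat E env phi.

Definition has_degree {V : Type} (E : V -> V -> Prop) (x : V) (n : nat)
  : Prop :=
  exists l : list V, NoDup l /\ length l = n /\ (forall y, E x y <-> In y l).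

Inductive walk {V : Type} (E : V -> V -> Prop) : V -> V -> nat -> Prop :=
  | walk_nil : forall x, walk E x x 0
  | walk_cons : forall x y z n, E x y -> walk E y z n -> walk E x z (S n).

Definition distance {V : Type} (E : V -> V -> Prop) (x y : V) (k : nat)
  : Prop :=
  walk E x y k /\ forall m, walk E x y m -> k <= m.

Fixpoint chain {V : Type} (E : V -> V -> Prop) (l : list V) : Prop :=
  match l with
  | x :: ((y :: _) as t) => E x y /\ chain E t
  | _ => True
  end.

Definition has_cycle {V : Type} (E : V -> V -> Prop) : Prop :=
  exists (x : V) (l : list V),
    NoDup (x :: l) /\ 2 <= length l /\ chain E (x :: l) /\
    E (last l x) x.

Definition undirected_graph {V : Type} (E : V -> V -> Prop) : Prop :=
  (forall x, ~ E x x) /\ (forall x y, E x y -> E y x).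

Definition in_class (V : Type) (E : V -> V -> Prop) : Prop :=
  undirected_graph E /\
  ~ has_cycle E /\
  (forall k : nat, 0 < k ->
     (exists l : list V, NoDup l /\ k <= length l /\
        forall v, In v l -> has_degree E v 4) /\
     (forall x y : V, has_degree E y 4 -> distance E y x k ->
        has_degree E x 3)).

Definition automorphism {V : Type} (E : V -> V -> Prop) (f : V -> V) : Prop :=
  (exists g : V -> V, (forall x, g (f x) = x) /\ (forall x, f (g x) = x)) /\
  (forall x y, E x y <-> E (f x) (f y)).

Definition rigid (V : Type) (E : V -> V -> Prop) : Prop :=
  forall f, automorphism E f -> forall x, f x = x.

Record perm_nat : Type := {
  pfun : nat -> nat;
  pinv : nat -> nat;
  pinv_l : forall n, pinv (pfun n) = n;
  pinv_r : forall n, pfun (pinv n) = n }.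

Definition perm_comp (p q : perm_nat) : perm_nat.
Proof.
  refine {| pfun := fun n => pfun p (pfun q n);
            pinv := fun n => pinv q (pinv p n) |}.
  - intro n. rewrite (pinv_l p). apply pinv_l.
  - intro n. rewrite (pinv_r q). apply pinv_r.
Defined.

(** Aut(V,E) has a subgroup isomorphic to S(omega): an injective group
    homomorphism S(omega) -> Aut(V,E) (its image is such a subgroup). *)
Definition embeds_S_omega (V : Type) (E : V -> V -> Prop) : Prop :=
  exists Phi : perm_nat -> V -> V,
    (forall p, automorphism E (Phi p)) /\
    (forall p q x, Phi (perm_comp p q) x = Phi p (Phi q x)) /\
    (forall p q, (forall x, Phi p x = Phi q x) -> forall n, pfun p n = pfun q n).

From Stdlib Require Import List.
From Stdlib Require Import Arith Lia Classical ClassicalEpsilon Eqdep_dec Bool FinFun.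
Import ListNotations.

(* The models of Gamma are the acyclic graphs with
   infinitely many vertices of degree 4 in which every vertex at positive
   distance from a vertex of degree 4 has degree 3; so the component of a
   degree-4 vertex is the tree T4 (root of degree 4, all other vertices of
   degree 3), and the other components are unconstrained.

   A finite Delta has bounded quantifier depth d.  We build two
   forests, coded by prefix-closed sets of finite sequences: M, a model of
   Gamma whose even components are copies of T4 and whose odd components are
   truncated copies of T3; and N, in which every component is a tree truncated
   at a fixed depth, each deepest vertex being continued by a single path
   whose length encodes the component and the address of the vertex.  Every
   ball of radius r in either forest reappears, in a fresh component, in the
   other one ("richness"); a Gaifman-style back-and-forth with radii
   r(n+1) = 3 r(n) + 1 then wins the d-round Ehrenfeucht-Fraisse game between
   N and M, so N satisfies Delta.  N is rigid: the distance from a leaf to the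
   nearest vertex of degree >= 3 is an automorphism invariant that determines
   the leaf, so leaves are fixed, and every other vertex is fixed by induction
   on its height above the leaves.

   In a model of Gamma, the component of a degree-4 vertex y is
   enumerated by "addresses" (a first digit < 4, then binary digits) by
   following a fixed enumeration of neighbours; this is an isomorphism from the
   address tree.  Choosing degree-4 vertices y0, y1, ... in distinct components,
   a permutation pi of omega acts by sending the vertex at address p below y_n
   to the vertex at address p below y_(pi n), and fixing all other vertices. *)

Section Walks.
Context {V : Type} (E : V -> V -> Prop).

Lemma walk_app : forall x y z m n, walk E x y m -> walk E y z n -> walk E x z (m + n).
Proof.
  intros x y z m n H; revert z n; induction H; intros; simpl; auto.
  econstructor; eauto.
Qed.

Lemma walk_one : forall x y, E x y -> walk E x y 1.
Proof. intros; econstructor; eauto; constructor. Qed.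

Lemma walk_snoc : forall x y z n, walk E x y n -> E y z -> walk E x z (S n).
Proof. intros. replace (S n) with (n + 1) by lia. eapply walk_app; eauto using walk_one. Qed.

Lemma walk_last : forall x z n, walk E x z (S n) -> exists y, walk E x y n /\ E y z.
Proof.
  intros x z n; revert x z; induction n; intros x z H; inversion H; subst.
  - inversion H4; subst. exists x; split; [constructor|auto].
  - destruct (IHn _ _ H4) as [w [Hw Hw']]. exists w; split; auto. econstructor; eauto.
Qed.

Lemma walk_0 : forall x y, walk E x y 0 -> x = y.
Proof. intros x y H; inversion H; auto. Qed.

Lemma walk_rev : (forall x y, E x y -> E y x) -> forall x y n, walk E x y n -> walk E y x n.
Proof.
  intros Hs x y n H; induction H. constructor.
  replace (S n) with (n + 1) by lia. eapply walk_app; eauto using walk_one.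
Qed.
End Walks.

Lemma skipn_app_le : forall {A} n (a s : list A), length a <= n -> skipn n (a ++ s) = skipn (n - length a) s.
Proof. intros. rewrite skipn_app. rewrite skipn_all2 by lia. auto. Qed.
Lemma firstn_app_ge : forall {A} n (a s : list A), n <= length a -> firstn n (a ++ s) = firstn n a.
Proof. intros. rewrite firstn_app. replace (n - length a) with 0 by lia. simpl; apply app_nil_r. Qed.
Lemma skipn_app_ge : forall {A} n (a s : list A), n <= length a -> skipn n (a ++ s) = skipn n a ++ s.
Proof. intros. rewrite skipn_app. replace (n - length a) with 0 by lia. auto. Qed.
Lemma skipn_repeat : forall {A} (x : A) n m, skipn n (repeat x m) = repeat x (m - n).
Proof. intros A x n; induction n; intros [|m]; simpl; auto. Qed.
Lemma firstn_repeat : forall {A} (x : A) n m, n <= m -> firstn n (repeat x m) = repeat x n.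
Proof. intros A x n; induction n; intros [|m] H; simpl; auto; try lia. rewrite IHn; auto; lia. Qed.
Lemma in_firstn : forall {A} (x : A) n l, In x (firstn n l) -> In x l.
Proof. intros. rewrite <- (firstn_skipn n l). apply in_or_app; auto. Qed.

Lemma sat_ext : forall {V} (E : V -> V -> Prop) phi (e e' : nat -> V),
  (forall x, free_in x phi -> e x = e' x) -> (sat E e phi <-> sat E e' phi).
Proof.
  intros V E phi; induction phi; intros e e' H; simpl in *.
  - rewrite (H n), (H n0); auto; tauto.
  - rewrite (H n), (H n0); auto; tauto.
  - tauto.
  - rewrite (IHphi e e'); auto; tauto.
  - rewrite (IHphi1 e e'), (IHphi2 e e'); auto; tauto.
  - rewrite (IHphi1 e e'), (IHphi2 e e'); auto; tauto.
  - rewrite (IHphi1 e e'), (IHphi2 e e'); auto; tauto.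
  - split; intros Hs v; [rewrite <- (IHphi (update e n v))|rewrite (IHphi (update e n v) (update e' n v))]; auto;
    intros x Hx; unfold update; destruct (Nat.eqb_spec x n); auto.
  - split; intros [v Hs]; exists v; [rewrite <- (IHphi (update e n v))|rewrite (IHphi (update e n v) (update e' n v))]; auto;
    intros x Hx; unfold update; destruct (Nat.eqb_spec x n); auto.
Qed.

Lemma sentence_env : forall {V} (E : V -> V -> Prop) phi (e e' : nat -> V),
  sentence phi -> (sat E e phi <-> sat E e' phi).
Proof. intros. apply sat_ext. intros x Hx; exfalso; eapply H; eauto. Qed.

Lemma update_same : forall {V} (e : nat -> V) x v, update e x v x = v.
Proof. intros; unfold update; rewrite Nat.eqb_refl; auto. Qed.

Lemma update_other : forall {V} (e : nat -> V) x v j, j <> x -> update e x v j = e j.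
Proof. intros; unfold update; destruct (Nat.eqb_spec j x); congruence. Qed.

(** * Ehrenfeucht-Fraisse games *)

Fixpoint qdepth (phi : formula) : nat :=
  match phi with
  | FEq _ _ | FRel _ _ | FFalse => 0
  | FNot p => qdepth p
  | FAnd p q | FOr p q | FImp p q => Nat.max (qdepth p) (qdepth q)
  | FAll _ p | FEx _ p => S (qdepth p)
  end.

Section Games.
Context {V1 V2 : Type} (E1 : V1 -> V1 -> Prop) (E2 : V2 -> V2 -> Prop).

Definition same_atoms (e1 : nat -> V1) (e2 : nat -> V2) : Prop :=
  forall i j, (e1 i = e1 j <-> e2 i = e2 j) /\ (E1 (e1 i) (e1 j) <-> E2 (e2 i) (e2 j)).

Fixpoint ef_win (n : nat) (e1 : nat -> V1) (e2 : nat -> V2) : Prop :=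
  same_atoms e1 e2 /\
  match n with
  | 0 => True
  | S n' => (forall x v1, exists v2, ef_win n' (update e1 x v1) (update e2 x v2)) /\
            (forall x v2, exists v1, ef_win n' (update e1 x v1) (update e2 x v2))
  end.

Lemma ef_win_atoms : forall n e1 e2, ef_win n e1 e2 -> same_atoms e1 e2.
Proof. intros [|n] e1 e2 H; apply H. Qed.

Lemma ef_win_sat : forall phi n e1 e2, ef_win n e1 e2 -> qdepth phi <= n ->
  (sat E1 e1 phi <-> sat E2 e2 phi).
Proof.
  induction phi; intros m e1 e2 HG Hq; simpl in *.
  - apply (ef_win_atoms _ _ _ HG).
  - apply (ef_win_atoms _ _ _ HG).
  - tauto.
  - rewrite (IHphi m e1 e2); auto; tauto.
  - rewrite (IHphi1 m e1 e2), (IHphi2 m e1 e2); auto; try tauto; lia.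
  - rewrite (IHphi1 m e1 e2), (IHphi2 m e1 e2); auto; try tauto; lia.
  - rewrite (IHphi1 m e1 e2), (IHphi2 m e1 e2); auto; try tauto; lia.
  - destruct m as [|m]; [lia|]. destruct HG as [_ [Hf Hb]]. split.
    + intros H v2. destruct (Hb n v2) as [v1 Hv]. rewrite <- (IHphi m _ _ Hv); auto; lia.
    + intros H v1. destruct (Hf n v1) as [v2 Hv]. rewrite (IHphi m _ _ Hv); auto; lia.
  - destruct m as [|m]; [lia|]. destruct HG as [_ [Hf Hb]]. split.
    + intros [v1 H]. destruct (Hf n v1) as [v2 Hv]. exists v2. rewrite <- (IHphi m _ _ Hv); auto; lia.
    + intros [v2 H]. destruct (Hb n v2) as [v1 Hv]. exists v1. rewrite (IHphi m _ _ Hv); auto; lia.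
Qed.
End Games.

(** * Balls, local isomorphisms and the back-and-forth *)

Definition Ball {V} (E : V -> V -> Prop) (e : nat -> V) r x :=
  exists i k, k <= r /\ walk E (e i) x k.
Definition BallAt {V} (E : V -> V -> Prop) (v : V) r x :=
  exists k, k <= r /\ walk E v x k.

Definition LocIso {V1 V2} (E1 : V1 -> V1 -> Prop) (E2 : V2 -> V2 -> Prop)
  (P1 : V1 -> Prop) (P2 : V2 -> Prop) (f : V1 -> V2) (g : V2 -> V1) : Prop :=
  (forall x, P1 x -> P2 (f x) /\ g (f x) = x) /\
  (forall y, P2 y -> P1 (g y) /\ f (g y) = y) /\
  (forall x y, P1 x -> P1 y -> (E1 x y <-> E2 (f x) (f y))).

(* Richness at radius r: every r-ball of the first graph is isomorphic, by a
   map sending centre to centre, to an r-ball of the second graph whose centre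
   lies in a component avoiding any prescribed finite set l2. *)
Definition Rich {V1 V2} (E1 : V1 -> V1 -> Prop) (E2 : V2 -> V2 -> Prop) r :=
  forall (v1 : V1) (l2 : list V2), exists v2 f g, f v1 = v2 /\ g v2 = v1 /\
    (forall u x k k', In u l2 -> walk E2 u x k -> walk E2 v2 x k' -> False) /\
    LocIso E1 E2 (BallAt E1 v1 r) (BallAt E2 v2 r) f g.

(* Radius of the balls to be matched when n rounds remain. *)
Fixpoint radius (n : nat) : nat := match n with 0 => 0 | S n => 3 * radius n + 1 end.

Lemma radius_mono : forall m n, m <= n -> radius m <= radius n.
Proof. intros m n H; induction H; simpl; lia. Qed.

Definition finite_range {V} (e : nat -> V) := exists l : list V, forall i, In (e i) l.

(* The back-and-forth invariant with n rounds left: the radius(n)-balls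
   around the two (finitely valued) environments are isomorphic. *)
Definition BallMatch {V1 V2} (E1 : V1 -> V1 -> Prop) (E2 : V2 -> V2 -> Prop) n
  (e1 : nat -> V1) (e2 : nat -> V2) :=
  exists f g, (forall i, f (e1 i) = e2 i /\ g (e2 i) = e1 i) /\
    finite_range e1 /\ finite_range e2 /\
    LocIso E1 E2 (Ball E1 e1 (radius n)) (Ball E2 e2 (radius n)) f g.

Section LocIso.
Context {V1 V2 : Type} (E1 : V1 -> V1 -> Prop) (E2 : V2 -> V2 -> Prop).

Lemma LocIso_sym : forall P1 P2 f g, LocIso E1 E2 P1 P2 f g -> LocIso E2 E1 P2 P1 g f.
Proof.
  intros P1 P2 f g [H1 [H2 H3]]. split; [|split]; auto.
  intros x y Hx Hy. destruct (H2 x Hx) as [Hx1 Hx2]. destruct (H2 y Hy) as [Hy1 Hy2].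
  rewrite (H3 _ _ Hx1 Hy1), Hx2, Hy2. tauto.
Qed.

Lemma LocIso_sub : forall P1 P2 Q1 Q2 f g,
  LocIso E1 E2 P1 P2 f g -> (forall x, Q1 x -> P1 x) -> (forall y, Q2 y -> P2 y) ->
  (forall x, Q1 x -> Q2 (f x)) -> (forall y, Q2 y -> Q1 (g y)) -> LocIso E1 E2 Q1 Q2 f g.
Proof.
  intros P1 P2 Q1 Q2 f g [H1 [H2 H3]] S1 S2 M1 M2. split; [|split].
  - intros x Hx; split; auto. apply H1; auto.
  - intros y Hy; split; auto. apply H2; auto.
  - intros; apply H3; auto.
Qed.

Lemma LocIso_transport : forall P1 P2 f g, LocIso E1 E2 P1 P2 f g -> forall p k z,
  (forall z' k', k' <= k -> walk E1 p z' k' -> P1 z') ->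
  walk E1 p z k -> walk E2 (f p) (f z) k.
Proof.
  intros P1 P2 f g [_ [_ H3]] p k. induction k; intros z HP Hw.
  - apply walk_0 in Hw; subst; constructor.
  - destruct (walk_last _ _ _ _ Hw) as [y [Hy Hyz]].
    apply walk_snoc with (f y).
    + apply IHk; auto. intros; apply (HP z' k'); auto.
    + apply H3; auto. apply (HP y k); auto. apply (HP z (S k)); auto.
Qed.

Lemma ball_transport : forall e1 R P2 f g, LocIso E1 E2 (Ball E1 e1 R) P2 f g ->
  forall i p z k0 k, walk E1 (e1 i) p k0 -> k0 + k <= R ->
  walk E1 p z k -> walk E2 (f p) (f z) k.
Proof.
  intros e1 R P2 f g HL i p z k0 k Hp Hk Hw. eapply LocIso_transport; eauto.
  intros z' k' Hk' Hw'. exists i, (k0 + k'). split; [lia|]. eapply walk_app; eauto.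
Qed.

Lemma ball_transport_center : forall e1 R P2 f g, LocIso E1 E2 (Ball E1 e1 R) P2 f g ->
  forall j z k, k <= R -> walk E1 (e1 j) z k -> walk E2 (f (e1 j)) (f z) k.
Proof.
  intros e1 R P2 f g HL j z k Hk Hw. apply (ball_transport e1 R P2 f g HL j (e1 j) z 0 k); auto.
  constructor.
Qed.

Definition glue {A B} (Q : A -> Prop) (h h' : A -> B) (z : A) : B :=
  if excluded_middle_informative (Q z) then h z else h' z.

Lemma glue_in : forall {A B} (Q : A -> Prop) (h h' : A -> B) z, Q z -> glue Q h h' z = h z.
Proof. intros; unfold glue; destruct excluded_middle_informative; tauto. Qed.

Lemma glue_out : forall {A B} (Q : A -> Prop) (h h' : A -> B) z, ~ Q z -> glue Q h h' z = h' z.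
Proof. intros; unfold glue; destruct excluded_middle_informative; tauto. Qed.

Lemma LocIso_glue : forall P1 P2 Q1 Q2 f g f' g',
  LocIso E1 E2 P1 P2 f g -> LocIso E1 E2 Q1 Q2 f' g' ->
  (forall x, P1 x -> ~ Q1 x) -> (forall y, P2 y -> ~ Q2 y) ->
  (forall x z, P1 x -> Q1 z -> ~ E1 x z /\ ~ E1 z x) ->
  (forall x z, P2 x -> Q2 z -> ~ E2 x z /\ ~ E2 z x) ->
  LocIso E1 E2 (fun z => P1 z \/ Q1 z) (fun z => P2 z \/ Q2 z) (glue Q1 f' f) (glue Q2 g' g).
Proof.
  intros P1 P2 Q1 Q2 f g f' g' [Hf [Hg Hadj]] [Hf' [Hg' Hadj']] HD1 HD2 HN1 HN2.
  split; [|split].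
  - intros x [Hx|Hx].
    + rewrite glue_out by auto. destruct (Hf x Hx) as [H1 H2].
      rewrite glue_out by auto. auto.
    + rewrite glue_in by auto. destruct (Hf' x Hx) as [H1 H2]. rewrite glue_in; auto.
  - intros y [Hy|Hy].
    + rewrite glue_out by auto. destruct (Hg y Hy) as [H1 H2].
      rewrite glue_out by auto. auto.
    + rewrite glue_in by auto. destruct (Hg' y Hy) as [H1 H2]. rewrite glue_in; auto.
  - intros x z [Hx|Hx] [Hz|Hz].
    + rewrite !glue_out by auto. auto.
    + rewrite glue_out, glue_in by auto.
      pose proof (HN1 x z Hx Hz). pose proof (HN2 (f x) (f' z) (proj1 (Hf x Hx)) (proj1 (Hf' z Hz))). tauto.
    + rewrite glue_in, glue_out by auto.
      pose proof (HN1 z x Hz Hx). pose proof (HN2 (f z) (f' x) (proj1 (Hf z Hz)) (proj1 (Hf' x Hx))). tauto.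
    + rewrite !glue_in by auto. auto.
Qed.
Lemma ball_update_near : forall e1 e2 R P2 f g i0 v k0 r x,
  LocIso E1 E2 (Ball E1 e1 R) P2 f g -> (forall i, f (e1 i) = e2 i) ->
  walk E1 (e1 i0) v k0 -> k0 + r <= R -> r <= R ->
  forall z, Ball E1 (update e1 x v) r z ->
  Ball E1 e1 R z /\ Ball E2 (update e2 x (f v)) r (f z).
Proof.
  intros e1 e2 R P2 f g i0 v k0 r x HL Hpt Hv Hk0 Hr z [j [k [Hk Hw]]].
  unfold update in Hw. destruct (Nat.eqb_spec j x) as [->|Hj].
  - split.
    + exists i0, (k0 + k). split; [lia|]. eapply walk_app; eauto.
    + exists x, k. rewrite update_same. split; auto.
      eapply ball_transport; eauto. lia.
  - split.
    + exists j, k. split; [lia|auto].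
    + exists j, k. rewrite update_other by auto. split; auto. rewrite <- Hpt.
      eapply ball_transport_center; eauto; lia.
Qed.

(* In the far case the new ball is the disjoint union of the old ball and the
   ball of the new point; the glued map sends it onto the new ball. *)
Lemma ball_update_far : forall e1 e2 r f g f' g' x v1 v2,
  LocIso E1 E2 (Ball E1 e1 r) (Ball E2 e2 r) f g -> (forall i, f (e1 i) = e2 i) ->
  LocIso E1 E2 (BallAt E1 v1 r) (BallAt E2 v2 r) f' g' -> f' v1 = v2 ->
  (forall z, Ball E1 e1 r z -> ~ BallAt E1 v1 r z) ->
  (forall i, glue (BallAt E1 v1 r) f' f (update e1 x v1 i) = update e2 x v2 i) /\
  (forall z, Ball E1 (update e1 x v1) r z ->
     Ball E2 (update e2 x v2) r (glue (BallAt E1 v1 r) f' f z)).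
Proof.
  intros e1 e2 r f g f' g' x v1 v2 HL Hpt HL' Hv HD.
  assert (Hc1 : BallAt E1 v1 r v1) by (exists 0; split; [lia|constructor]).
  assert (He1 : forall i, Ball E1 e1 r (e1 i)) by (intro i; exists i, 0; split; [lia|constructor]).
  split.
  - intro i. unfold update. destruct (Nat.eqb_spec i x).
    + rewrite glue_in; auto.
    + rewrite glue_out; auto.
  - intros z [j [k [Hk Hw]]]. unfold update in Hw. destruct (Nat.eqb_spec j x) as [->|Hj].
    + assert (Hz : BallAt E1 v1 r z) by (exists k; auto).
      rewrite glue_in by auto. destruct (proj1 HL' z Hz) as [[k' [Hk' Hw']] _].
      exists x, k'. rewrite update_same. auto.
    + assert (Hz : Ball E1 e1 r z) by (exists j, k; auto).
      rewrite glue_out by auto. exists j, k. rewrite update_other by auto. split; auto.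
      rewrite <- Hpt. eapply ball_transport_center; eauto; lia.
Qed.
End LocIso.

Lemma ball_shrink : forall {V1 V2} (E1 : V1 -> V1 -> Prop) (E2 : V2 -> V2 -> Prop) e1 e2 R r f g, r <= R ->
  (forall i, f (e1 i) = e2 i /\ g (e2 i) = e1 i) ->
  LocIso E1 E2 (Ball E1 e1 R) (Ball E2 e2 R) f g ->
  LocIso E1 E2 (Ball E1 e1 r) (Ball E2 e2 r) f g.
Proof.
  intros V1 V2 E1 E2 e1 e2 R r f g Hr Hpt HL. pose proof (LocIso_sym _ _ _ _ _ _ HL) as HLs.
  eapply LocIso_sub; [exact HL| | | |].
  - intros z [j [k [Hk Hw]]]. exists j, k; split; [lia|auto].
  - intros z [j [k [Hk Hw]]]. exists j, k; split; [lia|auto].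
  - intros z [j [k [Hk Hw]]]. exists j, k. split; auto. rewrite <- (proj1 (Hpt j)).
    eapply ball_transport_center; eauto; lia.
  - intros z [j [k [Hk Hw]]]. exists j, k. split; auto. rewrite <- (proj2 (Hpt j)).
    eapply ball_transport_center; eauto; lia.
Qed.

Lemma far_balls_apart : forall {V} (E : V -> V -> Prop), (forall x y, E x y -> E y x) ->
  forall (e : nat -> V) v r, (forall i k, k <= 2 * r + 1 -> ~ walk E (e i) v k) ->
  forall x z, Ball E e r x -> BallAt E v r z -> x <> z /\ ~ E x z /\ ~ E z x.
Proof.
  intros V E Hs e v r Hfar x z [i [k [Hk Hw]]] [k' [Hk' Hw']].
  assert (Hwz : walk E z v k') by (apply walk_rev; auto).
  split; [|split]; intro H.
  - subst. apply (Hfar i (k + k')); [lia|]. eapply walk_app; eauto.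
  - apply (Hfar i (S k + k')); [lia|]. eapply walk_app; [eapply walk_snoc|]; eauto.
  - apply (Hfar i (S k + k')); [lia|]. eapply walk_app; [eapply walk_snoc|]; eauto.
Qed.

Lemma match_sym : forall {V1 V2} (E1 : V1 -> V1 -> Prop) (E2 : V2 -> V2 -> Prop) n e1 e2,
  BallMatch E1 E2 n e1 e2 -> BallMatch E2 E1 n e2 e1.
Proof.
  intros V1 V2 E1 E2 n e1 e2 [f [g [Hpt [H1 [H2 HL]]]]].
  exists g, f. split; [intro i; split; apply Hpt|]. split; [auto|]. split; [auto|].
  apply LocIso_sym; auto.
Qed.

Section Forth.
Context {V1 V2 : Type} (E1 : V1 -> V1 -> Prop) (E2 : V2 -> V2 -> Prop).
Hypothesis E1_sym : forall x y, E1 x y -> E1 y x.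
Hypothesis E2_sym : forall x y, E2 x y -> E2 y x.

Lemma match_atoms : forall n e1 e2, BallMatch E1 E2 n e1 e2 -> same_atoms E1 E2 e1 e2.
Proof.
  intros n e1 e2 [f [g [Hpt [_ [_ [Hf [Hg Hadj]]]]]]] i j. split.
  - split; intro H.
    + rewrite <- (proj1 (Hpt i)), <- (proj1 (Hpt j)), H; auto.
    + rewrite <- (proj2 (Hpt i)), <- (proj2 (Hpt j)), H; auto.
  - rewrite <- (proj1 (Hpt i)), <- (proj1 (Hpt j)).
    apply Hadj; [exists i, 0|exists j, 0]; split; try lia; constructor.
Qed.

(* Spoiler plays within distance 2r+1 of the position: answer by the image
   under the current isomorphism. *)
Lemma forth_near : forall n e1 e2 x v1, BallMatch E1 E2 (S n) e1 e2 ->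
  (exists i k, k <= 2 * radius n + 1 /\ walk E1 (e1 i) v1 k) ->
  exists v2, BallMatch E1 E2 n (update e1 x v1) (update e2 x v2).
Proof.
  intros n e1 e2 x v1 [f [g [Hpt [[l1 Hl1] [[l2 Hl2] HL]]]]] [i0 [k0 [Hk0 Hw0]]].
  change (radius (S n)) with (3 * radius n + 1) in HL.
  pose proof (LocIso_sym _ _ _ _ _ _ HL) as HLs.
  assert (Hv1 : Ball E1 e1 (3 * radius n + 1) v1) by (exists i0, k0; split; [lia|auto]).
  destruct (proj1 HL v1 Hv1) as [Hfv1 Hgfv1].
  assert (Hw0' : walk E2 (e2 i0) (f v1) k0).
  { rewrite <- (proj1 (Hpt i0)). eapply ball_transport_center; eauto; lia. }
  pose proof (ball_update_near E1 E2 e1 e2 _ _ f g i0 v1 k0 (radius n) x HL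
                (fun i => proj1 (Hpt i)) Hw0 ltac:(lia) ltac:(lia)) as N1.
  pose proof (ball_update_near E2 E1 e2 e1 _ _ g f i0 (f v1) k0 (radius n) x HLs
                (fun i => proj2 (Hpt i)) Hw0' ltac:(lia) ltac:(lia)) as N2.
  rewrite Hgfv1 in N2.
  exists (f v1), f, g. split; [|split; [|split]].
  - intro i. unfold update. destruct (Nat.eqb_spec i x); auto.
  - exists (v1 :: l1). intro i. unfold update. destruct (Nat.eqb_spec i x); simpl; auto.
  - exists (f v1 :: l2). intro i. unfold update. destruct (Nat.eqb_spec i x); simpl; auto.
  - eapply LocIso_sub; [exact HL| | | |]; intros z Hz.
    + exact (proj1 (N1 z Hz)).
    + exact (proj1 (N2 z Hz)).
    + exact (proj2 (N1 z Hz)).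
    + exact (proj2 (N2 z Hz)).
Qed.

(* Spoiler plays far from the position: answer by a copy of its ball in a
   fresh component, provided by richness. *)
Lemma forth_far : forall n e1 e2 x v1, Rich E1 E2 (radius n) ->
  BallMatch E1 E2 (S n) e1 e2 ->
  (forall i k, k <= 2 * radius n + 1 -> ~ walk E1 (e1 i) v1 k) ->
  exists v2, BallMatch E1 E2 n (update e1 x v1) (update e2 x v2).
Proof.
  intros n e1 e2 x v1 HR [f [g [Hpt [[l1 Hl1] [[l2 Hl2] HL]]]]] Hfar.
  set (r := radius n) in *.
  destruct (HR v1 l2) as [v2 [f' [g' [Hfv [Hgv [Hfresh HL']]]]]].
  assert (HLr : LocIso E1 E2 (Ball E1 e1 r) (Ball E2 e2 r) f g).
  { apply ball_shrink with (R := radius (S n)); auto. simpl; lia. }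
  assert (Hfar2 : forall i k, k <= 2 * r + 1 -> ~ walk E2 (e2 i) v2 k).
  { intros i k _ Hw. apply (Hfresh (e2 i) v2 k 0); auto. constructor. }
  pose proof (far_balls_apart E1 E1_sym e1 v1 r Hfar) as Ap1.
  pose proof (far_balls_apart E2 E2_sym e2 v2 r Hfar2) as Ap2.
  assert (HD1 : forall z, Ball E1 e1 r z -> ~ BallAt E1 v1 r z) by (intros z Hz Hz'; exact (proj1 (Ap1 z z Hz Hz') eq_refl)).
  assert (HD2 : forall z, Ball E2 e2 r z -> ~ BallAt E2 v2 r z) by (intros z Hz Hz'; exact (proj1 (Ap2 z z Hz Hz') eq_refl)).
  assert (HG := LocIso_glue E1 E2 _ _ _ _ _ _ _ _ HLr HL' HD1 HD2
                  (fun x z Hx Hz => proj2 (Ap1 x z Hx Hz)) (fun x z Hx Hz => proj2 (Ap2 x z Hx Hz))).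
  destruct (ball_update_far E1 E2 e1 e2 r f g f' g' x v1 v2 HLr (fun i => proj1 (Hpt i)) HL' Hfv HD1) as [P1 M1].
  destruct (ball_update_far E2 E1 e2 e1 r g f g' f' x v2 v1 (LocIso_sym _ _ _ _ _ _ HLr)
              (fun i => proj2 (Hpt i)) (LocIso_sym _ _ _ _ _ _ HL') Hgv HD2) as [P2 M2].
  exists v2, (glue (BallAt E1 v1 r) f' f), (glue (BallAt E2 v2 r) g' g).
  split; [intro i; split; auto|split; [|split]].
  - exists (v1 :: l1). intro i. unfold update. destruct (Nat.eqb_spec i x); simpl; auto.
  - exists (v2 :: l2). intro i. unfold update. destruct (Nat.eqb_spec i x); simpl; auto.
  - eapply LocIso_sub; [exact HG| | |exact M1|exact M2]; intros z [j [k [Hk Hw]]];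
      unfold update in Hw; destruct (Nat.eqb_spec j x);
      solve [right; exists k; auto | left; exists j, k; auto].
Qed.
End Forth.

Lemma match_wins : forall {V1 V2} (E1 : V1 -> V1 -> Prop) (E2 : V2 -> V2 -> Prop),
  (forall x y, E1 x y -> E1 y x) -> (forall x y, E2 x y -> E2 y x) ->
  forall n, (forall m, m < n -> Rich E1 E2 (radius m) /\ Rich E2 E1 (radius m)) ->
  forall e1 e2, BallMatch E1 E2 n e1 e2 -> ef_win E1 E2 n e1 e2.
Proof.
  intros V1 V2 E1 E2 S1 S2 n. induction n; intros HR e1 e2 HM.
  - split; auto. eapply match_atoms; eauto.
  - assert (HR' : forall m, m < n -> Rich E1 E2 (radius m) /\ Rich E2 E1 (radius m))
      by (intros; apply HR; lia).
    split; [eapply match_atoms; eauto|split].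
    + intros x v1.
      destruct (classic (exists i k, k <= 2 * radius n + 1 /\ walk E1 (e1 i) v1 k)) as [Hn|Hf].
      * destruct (forth_near E1 E2 n e1 e2 x v1 HM Hn) as [v2 Hv]. exists v2; auto.
      * destruct (forth_far E1 E2 S1 S2 n e1 e2 x v1 (proj1 (HR n ltac:(lia))) HM) as [v2 Hv];
          [intros i k Hk Hw; apply Hf; eauto|].
        exists v2; auto.
    + intros x v2. apply match_sym in HM.
      destruct (classic (exists i k, k <= 2 * radius n + 1 /\ walk E2 (e2 i) v2 k)) as [Hn|Hf].
      * destruct (forth_near E2 E1 n e2 e1 x v2 HM Hn) as [v1 Hv].
        exists v1. apply IHn; auto. apply match_sym; auto.
      * destruct (forth_far E2 E1 S2 S1 n e2 e1 x v2 (proj2 (HR n ltac:(lia))) HM) as [v1 Hv];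
          [intros i k Hk Hw; apply Hf; eauto|].
        exists v1. apply IHn; auto. apply match_sym; auto.
Qed.

Lemma match_init : forall {V1 V2} (E1 : V1 -> V1 -> Prop) (E2 : V2 -> V2 -> Prop) n (v1 : V1),
  Rich E1 E2 (radius n) -> exists v2 : V2, BallMatch E1 E2 n (fun _ => v1) (fun _ => v2).
Proof.
  intros V1 V2 E1 E2 n v1 HR. destruct (HR v1 nil) as [v2 [f [g [H1 [H2 [_ HL]]]]]].
  exists v2, f, g. split; [intro i; split; auto|].
  split; [exists [v1]; intro; simpl; auto|]. split; [exists [v2]; intro; simpl; auto|].
  eapply LocIso_sub; eauto.
  - intros z [i [k Hk]]; exists k; auto.
  - intros z [i [k Hk]]; exists k; auto.
  - intros z [i [k Hk]]. exists 0. apply (proj1 HL). exists k; auto.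
  - intros z [i [k Hk]]. exists 0. apply (proj1 (proj2 HL)). exists k; auto.
Qed.

(** * Forests of sequences *)

(* A predicate F on pairs (c, p) describes a forest: the tree number c has the
   sequences p with F c p as vertices, a vertex being adjacent to its one-step
   extensions. *)
Section Forest.
Variable F : nat -> list nat -> bool.
Definition Node := {x : nat * list nat | F (fst x) (snd x) = true}.
Definition Adj (x y : Node) : Prop :=
  fst (proj1_sig x) = fst (proj1_sig y) /\
  exists i, snd (proj1_sig y) = snd (proj1_sig x) ++ [i] \/ snd (proj1_sig x) = snd (proj1_sig y) ++ [i].

Lemma node_eq : forall x y : Node, proj1_sig x = proj1_sig y -> x = y.
Proof.
  intros [x Hx] [y Hy]; simpl; intros; subst. f_equal. apply UIP_dec, bool_dec.
Qed.

Lemma Adj_sym : forall x y, Adj x y -> Adj y x.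
Proof. intros x y [H1 [i [H|H]]]; split; auto; exists i; auto. Qed.

Lemma Adj_irrefl : forall x, ~ Adj x x.
Proof.
  intros x [_ [i [H|H]]]; apply (f_equal (@length nat)) in H; rewrite length_app in H; simpl in H; lia.
Qed.

Lemma walk_same_tree : forall x y k, walk Adj x y k -> fst (proj1_sig x) = fst (proj1_sig y).
Proof. intros x y k H; induction H; auto. destruct H; congruence. Qed.

Lemma Adj_length : forall x y, Adj x y -> length (snd (proj1_sig y)) = S (length (snd (proj1_sig x))) \/
   length (snd (proj1_sig x)) = S (length (snd (proj1_sig y))).
Proof. intros x y [_ [i [H|H]]]; rewrite H, length_app; simpl; lia. Qed.

Lemma walk_length : forall x y k, walk Adj x y k ->
  length (snd (proj1_sig y)) <= length (snd (proj1_sig x)) + k /\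
  length (snd (proj1_sig x)) <= length (snd (proj1_sig y)) + k.
Proof. intros x y k H; induction H; [lia|]. destruct (Adj_length _ _ H); lia. Qed.

Definition mk_node (c : nat) (p : list nat) : option Node :=
  match F c p as b return (F c p = b -> option Node) with
  | true => fun H => Some (exist _ (c, p) H)
  | false => fun _ => None
  end eq_refl.

Lemma mk_node_some : forall c p, F c p = true -> exists y, mk_node c p = Some y /\ proj1_sig y = (c, p).
Proof.
  intros c p H. unfold mk_node. generalize (@eq_refl bool (F c p)).
  pattern (F c p) at 2 3. rewrite H. intros. eexists; split; reflexivity.
Qed.

Lemma mk_node_spec : forall c p y, mk_node c p = Some y -> proj1_sig y = (c, p).
Proof.
  intros c p y. unfold mk_node. generalize (@eq_refl bool (F c p)).
  pattern (F c p) at 2 3. destruct (F c p); intros; inversion H; auto.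
Qed.
End Forest.
Arguments node_eq {F}.
Arguments mk_node {F}.


Definition prefixb (a p : list nat) : bool :=
  if list_eq_dec Nat.eq_dec (firstn (length a) p) a then true else false.

Lemma prefixb_app : forall a s, prefixb a (a ++ s) = true.
Proof.
  intros; unfold prefixb. rewrite firstn_app, Nat.sub_diag, firstn_all; simpl; rewrite app_nil_r.
  destruct list_eq_dec; congruence.
Qed.

Definition shift_map (T1 T2 : nat -> list nat -> bool) (c c' : nat) (a a' : list nat)
   (d : Node T2) (x : Node T1) : Node T2 :=
  let (c0, p) := proj1_sig x in
  if (c0 =? c) && prefixb a p then
    match @mk_node T2 c' (a' ++ skipn (length a) p) with Some y => y | None => d end
  else d.

Lemma shift_map_spec : forall T1 T2 c c' a a' d x s'',
  proj1_sig x = (c, a ++ s'') -> T2 c' (a' ++ s'') = true ->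
  proj1_sig (shift_map T1 T2 c c' a a' d x) = (c', a' ++ s'').
Proof.
  intros T1 T2 c0 c1 a0 a1 d x s'' Hx HT. unfold shift_map. rewrite Hx.
  rewrite Nat.eqb_refl, prefixb_app. simpl.
  rewrite skipn_app, Nat.sub_diag, skipn_all; simpl.
  destruct (mk_node_some T2 _ _ HT) as [y [Hy Hy']]. rewrite Hy; auto.
Qed.

Lemma shift_adj : forall T1 T2 (x y : Node T1) c0 c1 b b' sx sy,
  proj1_sig x = (c0, b ++ sx) -> proj1_sig y = (c0, b ++ sy) ->
  forall (x' y' : Node T2), proj1_sig x' = (c1, b' ++ sx) -> proj1_sig y' = (c1, b' ++ sy) ->
  Adj T1 x y -> Adj T2 x' y'.
Proof.
  intros T1 T2 x y c0 c1 b b' sx sy Hx Hy x' y' Hx' Hy' [_ [i Hi]].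
  unfold Adj; rewrite Hx, Hy, Hx', Hy' in *; simpl in *. split; auto. exists i.
  destruct Hi as [Hi|Hi]; [left|right]; rewrite <- app_assoc in Hi; apply app_inv_head in Hi;
    rewrite Hi, app_assoc; auto.
Qed.

Lemma ball_shape : forall T (c : nat) (a s : list nat) (Hv : T c (a ++ s) = true) r,
  (length s = r \/ a = []) -> length s <= r ->
  forall k x, k <= r -> walk (Adj T) (exist _ (c, a ++ s) Hv) x k ->
  exists s'', proj1_sig x = (c, a ++ s'') /\ length s'' <= length s + k /\
    (a = [] \/ length s - k <= length s'').
Proof.
  intros T c0 a0 s Hv r Hr Hsr k. induction k; intros x Hk Hw.
  - apply walk_0 in Hw; subst. exists s; simpl; split; auto; split; auto; lia.
  - destruct (walk_last _ _ _ _ Hw) as [y [Hy HE]].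
    destruct (IHk y ltac:(lia) Hy) as [sy [Hy1 [Hy2 Hy3]]].
    destruct HE as [Hf [i [Hi|Hi]]]; rewrite Hy1 in Hf, Hi; simpl in Hf, Hi.
    + exists (sy ++ [i]). destruct (proj1_sig x) as [cx px]; simpl in *; subst.
      rewrite app_assoc; split; auto. rewrite length_app; simpl; split; [lia|]. destruct Hy3; auto; lia.
    + destruct (proj1_sig x) as [cx px] eqn:Ex; simpl in *; subst.
      destruct Hr as [Hr|Hr].
      * destruct Hy3 as [Ha|Hy3].
        -- subst a0; simpl in *. exists px; split; auto. rewrite Hi, length_app in Hy2; simpl in Hy2. split; [lia|auto].
        -- destruct (exists_last (l := sy)) as [s0 [j Hs0]].
           { intro; subst; simpl in *; lia. }
           subst sy. rewrite app_assoc in Hi. apply app_inj_tail in Hi. destruct Hi as [Hi _]. subst px.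
           exists s0; split; auto. rewrite length_app in *; simpl in *. split; [lia|right; lia].
      * subst a0; simpl in *. exists px; split; auto. rewrite Hi, length_app in Hy2; simpl in Hy2. split; [lia|auto].
Qed.

Section Shift.
Variables (T1 T2 : nat -> list nat -> bool) (c c' r : nat) (a a' s : list nat).
Hypothesis Hv : T1 c (a ++ s) = true.
Hypothesis Hw : T2 c' (a' ++ s) = true.
Hypothesis Hsr : length s <= r.
Hypothesis Hr : length s = r \/ a = [].
Hypothesis Hsh : forall s', length s' <= 2 * r -> T1 c (a ++ s') = T2 c' (a' ++ s').

Lemma shift_ball : forall x k, k <= r -> walk (Adj T1) (exist _ (c, a ++ s) Hv) x k ->
  exists s'', proj1_sig x = (c, a ++ s'') /\
    proj1_sig (shift_map T1 T2 c c' a a' (exist _ (c', a' ++ s) Hw) x) = (c', a' ++ s'').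
Proof.
  intros x k Hk Hx. destruct (ball_shape T1 c a s Hv r Hr Hsr k x Hk Hx) as [s'' [H1 [H2 _]]].
  exists s''. split; auto. apply shift_map_spec; auto. rewrite <- Hsh; [|lia].
  destruct x as [[cx px] Hpx]; simpl in *. inversion H1; subst; auto.
Qed.

Lemma shift_walk : forall k x, k <= r -> walk (Adj T1) (exist _ (c, a ++ s) Hv) x k ->
  walk (Adj T2) (exist _ (c', a' ++ s) Hw) (shift_map T1 T2 c c' a a' (exist _ (c', a' ++ s) Hw) x) k.
Proof.
  induction k; intros x Hk Hx.
  - apply walk_0 in Hx; subst x.
    replace (shift_map T1 T2 c c' a a' _ _) with (exist (fun x => T2 (fst x) (snd x) = true) (c', a' ++ s) Hw);
      [constructor|].
    symmetry. apply node_eq, shift_map_spec; auto.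
  - destruct (walk_last _ _ _ _ Hx) as [y [Hy HE]]. eapply walk_snoc; [apply IHk; eauto; lia|].
    destruct (shift_ball x _ Hk Hx) as [sx [Hx1 Hx2]].
    destruct (shift_ball y k ltac:(lia) Hy) as [sy [Hy1 Hy2]].
    exact (shift_adj T1 T2 y x c c' a a' sy sx Hy1 Hx1 _ _ Hy2 Hx2 HE).
Qed.
End Shift.

Lemma shift_iso : forall (T1 T2 : nat -> list nat -> bool) c c' a a' (r : nat) (s : list nat)
  (Hv : T1 c (a ++ s) = true) (Hw : T2 c' (a' ++ s) = true),
  length s <= r -> (length s = r \/ (a = [] /\ a' = [])) ->
  (forall s', length s' <= 2 * r -> T1 c (a ++ s') = T2 c' (a' ++ s')) ->
  exists f g, f (exist _ (c, a ++ s) Hv) = exist _ (c', a' ++ s) Hw /\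
    g (exist _ (c', a' ++ s) Hw) = exist _ (c, a ++ s) Hv /\
    LocIso (Adj T1) (Adj T2) (BallAt (Adj T1) (exist _ (c, a ++ s) Hv) r)
                             (BallAt (Adj T2) (exist _ (c', a' ++ s) Hw) r) f g.
Proof.
  intros T1 T2 c c' a a' r s Hv Hw Hsr Hr Hsh.
  assert (Hr1 : length s = r \/ a = []) by (destruct Hr as [H|[H _]]; auto).
  assert (Hr2 : length s = r \/ a' = []) by (destruct Hr as [H|[_ H]]; auto).
  assert (Hsh' : forall s', length s' <= 2 * r -> T2 c' (a' ++ s') = T1 c (a ++ s'))
    by (intros; symmetry; auto).
  set (v := exist (fun x => T1 (fst x) (snd x) = true) (c, a ++ s) Hv).
  set (w := exist (fun x => T2 (fst x) (snd x) = true) (c', a' ++ s) Hw).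
  pose proof (shift_ball T1 T2 c c' r a a' s Hv Hw Hsr Hr1 Hsh) as B1.
  pose proof (shift_ball T2 T1 c' c r a' a s Hw Hv Hsr Hr2 Hsh') as B2.
  pose proof (shift_walk T1 T2 c c' r a a' s Hv Hw Hsr Hr1 Hsh) as W1.
  pose proof (shift_walk T2 T1 c' c r a' a s Hw Hv Hsr Hr2 Hsh') as W2.
  exists (shift_map T1 T2 c c' a a' w), (shift_map T2 T1 c' c a' a v).
  split; [apply node_eq, shift_map_spec; auto|].
  split; [apply node_eq, shift_map_spec; auto|].
  split; [|split].
  - intros x [k [Hk Hx]]. split; [exists k; split; auto|].
    destruct (B1 x k Hk Hx) as [sx [Hx1 Hx2]]. apply node_eq. rewrite Hx1.
    apply shift_map_spec; auto. destruct x as [[cx px] Hpx]; simpl in *. inversion Hx1; subst; auto.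
  - intros x [k [Hk Hx]]. split; [exists k; split; auto|].
    destruct (B2 x k Hk Hx) as [sx [Hx1 Hx2]]. apply node_eq. rewrite Hx1.
    apply shift_map_spec; auto. destruct x as [[cx px] Hpx]; simpl in *. inversion Hx1; subst; auto.
  - intros x y [k [Hk Hx]] [k' [Hk' Hy]].
    destruct (B1 x _ Hk Hx) as [sx [Hx1 Hx2]]. destruct (B1 y _ Hk' Hy) as [sy [Hy1 Hy2]].
    split; intro HE.
    + exact (shift_adj T1 T2 x y c c' a a' sx sy Hx1 Hy1 _ _ Hx2 Hy2 HE).
    + exact (shift_adj T2 T1 _ _ c' c a' a sx sy Hx2 Hy2 x y Hx1 Hy1 HE).
Qed.

Lemma rich_of_shifts : forall S1 S2 r,
  (forall c p (H : S1 c p = true) (l2 : list (Node S2)), exists c' a a' s,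
     p = a ++ s /\ (forall u, In u l2 -> fst (proj1_sig u) <> c') /\ length s <= r /\
     (length s = r \/ (a = [] /\ a' = [])) /\
     (forall s', length s' <= 2 * r -> S1 c (a ++ s') = S2 c' (a' ++ s'))) ->
  Rich (Adj S1) (Adj S2) r.
Proof.
  intros S1 S2 r Hyp [[c p] H] l2. simpl in H.
  destruct (Hyp c p H l2) as [c' [a [a' [s [Hp [Hfr [Hs [Hr Hsh]]]]]]]]. subst p.
  assert (Hw : S2 c' (a' ++ s) = true) by (rewrite <- Hsh; auto; lia).
  destruct (shift_iso S1 S2 c c' a a' r s H Hw Hs Hr Hsh) as [f [g [H1 [H2 H3]]]].
  exists (exist _ (c', a' ++ s) Hw), f, g. split; [|split]; auto. split; auto.
  intros u x k k' Hu Hux Hvx. apply walk_same_tree in Hux. apply walk_same_tree in Hvx. simpl in Hvx.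
  apply (Hfr u Hu). congruence.
Qed.

(** * The concrete forests *)

Definition binary (s : list nat) : bool := forallb (fun j => j <? 2) s.
Definition zeros (s : list nat) : bool := forallb (Nat.eqb 0) s.

(* Addresses in the tree with a root of degree q and all other vertices of
   degree 3: a first digit < q, then binary digits. *)
Definition tree_node (q : nat) (p : list nat) : bool :=
  match p with [] => true | i :: s => (i <? q) && binary s end.

Fixpoint code4 (b : list nat) : nat := match b with [] => 0 | i :: s => i + 4 * code4 s end.

(* For a given rho, the trees are cut at depth 2 rho + 2; a vertex b at that
   depth in tree c is continued by a path of zeros of length tail_len rho c b,
   which encodes (c, b) and exceeds 2 rho. *)
Definition depth (rho : nat) := 2 * rho + 2.
Definition tail0 (rho : nat) := 2 * rho + 1.
Definition tail_len (rho c : nat) (b : list nat) : nat := tail0 rho + code4 b + 4 ^ depth rho * c.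
Definition trunc_node (rho q c : nat) (p : list nat) : bool :=
  tree_node q p && ((length p <=? depth rho) ||
             (zeros (skipn (depth rho) p) && (length p - depth rho <=? tail_len rho c (firstn (depth rho) p)))).

(* N: all trees truncated, with root degree 4 (c even) or 3 (c odd).
   M: copies of T4 (c even) and truncated trees with root degree 3 (c odd). *)
Definition famN (rho c : nat) : list nat -> bool := if Nat.even c then trunc_node rho 4 c else trunc_node rho 3 c.
Definition famM (rho c : nat) : list nat -> bool := if Nat.even c then tree_node 4 else trunc_node rho 3 c.
Definition fam (rho : nat) (isN : bool) : nat -> list nat -> bool := if isN then famN rho else famM rho.

Lemma tree_node_app : forall q a s, a <> [] -> tree_node q (a ++ s) = tree_node q a && binary s.
Proof.
  intros q [|i a] s H; [congruence|]. simpl. unfold binary. rewrite forallb_app. apply andb_assoc.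
Qed.

Lemma zeros_binary : forall s, zeros s = true -> binary s = true.
Proof.
  induction s; simpl; auto. intro H; apply andb_true_iff in H; destruct H as [H1 H2].
  destruct a; [|discriminate]. simpl. auto.
Qed.

Lemma zeros_repeat : forall n, zeros (repeat 0 n) = true.
Proof. induction n; simpl; auto. Qed.
Lemma binary_repeat : forall n, binary (repeat 0 n) = true.
Proof. intros; apply zeros_binary, zeros_repeat. Qed.
Lemma tree_node_repeat : forall q n, 0 < q -> tree_node q (repeat 0 n) = true.
Proof. intros q [|n] Hq; simpl; auto. rewrite binary_repeat. destruct q; [lia|]; auto. Qed.

Lemma tree_node_lt4 : forall q p, q <= 4 -> tree_node q p = true -> forall i, In i p -> i < 4.
Proof.
  intros q [|j p] Hq H i Hi; simpl in *; [tauto|]. apply andb_true_iff in H; destruct H as [H1 H2].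
  apply Nat.ltb_lt in H1. destruct Hi; [lia|]. unfold binary in H2. rewrite forallb_forall in H2.
  apply H2 in H. apply Nat.ltb_lt in H. lia.
Qed.

Lemma code4_lt : forall b, (forall i, In i b -> i < 4) -> code4 b < 4 ^ length b.
Proof.
  induction b; simpl; intros; auto. assert (a < 4) by auto. assert (code4 b < 4 ^ length b) by auto. lia.
Qed.

Lemma code4_inj : forall b b', length b = length b' -> (forall i, In i b -> i < 4) -> (forall i, In i b' -> i < 4) ->
  code4 b = code4 b' -> b = b'.
Proof.
  induction b as [|i b IH]; intros [|i' b'] Hl H H' Hn; simpl in *; try lia; auto.
  assert (i < 4) by auto. assert (i' < 4) by auto.
  assert (i = i') by lia. subst. f_equal. apply IH; auto. lia.
Qed.

Lemma zeros_eq_repeat : forall l, zeros l = true -> l = repeat 0 (length l).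
Proof.
  induction l; simpl; auto. intro H. apply andb_true_iff in H. destruct H as [H1 H2].
  destruct a; [|discriminate]. f_equal; auto.
Qed.

Lemma trunc_node_short : forall rho q c p, length p <= depth rho -> trunc_node rho q c p = tree_node q p.
Proof.
  intros. unfold trunc_node. apply Nat.leb_le in H. rewrite H. simpl. apply andb_true_r.
Qed.

Lemma fam_short : forall rho b c p, length p <= depth rho ->
  fam rho b c p = tree_node (if Nat.even c then 4 else 3) p.
Proof.
  intros. unfold fam, famN, famM. destruct b; cbv beta; destruct (Nat.even c); rewrite ?trunc_node_short; auto.
Qed.

Lemma fam_odd : forall rho b c, Nat.even c = false -> fam rho b c = trunc_node rho 3 c.
Proof. intros. unfold fam, famN, famM. destruct b; cbv beta; rewrite H; auto. Qed.

Lemma fam_cases : forall rho b c, (fam rho b c = tree_node 4) \/ (exists q, 3 <= q <= 4 /\ fam rho b c = trunc_node rho q c).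
Proof.
  intros. unfold fam, famN, famM. destruct b; cbv beta; destruct (Nat.even c);
  first [left; reflexivity | right; exists 4; split; [lia|reflexivity] | right; exists 3; split; [lia|reflexivity]].
Qed.

Lemma code4_repeat : forall n, code4 (repeat 0 n) = 0.
Proof. induction n; simpl; auto; lia. Qed.

Lemma tree_node_prefix : forall q a s, a <> [] -> tree_node q (a ++ s) = true -> tree_node q a = true.
Proof. intros. rewrite tree_node_app in H0; auto. apply andb_true_iff in H0; tauto. Qed.

Lemma trunc_node_mid : forall rho q c a s', tree_node q a = true -> a <> [] -> length a <= depth rho ->
  length s' <= 2 * rho ->
  trunc_node rho q c (a ++ s') = binary s' && ((length a + length s' <=? depth rho) || zeros (skipn (depth rho - length a) s')).
Proof.
  intros. unfold trunc_node. rewrite tree_node_app, H; auto. simpl. rewrite length_app, skipn_app_le; auto.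
  f_equal. f_equal. replace (length a + length s' - depth rho <=? tail_len rho c (firstn (depth rho) (a ++ s'))) with true.
  apply andb_true_r. symmetry; apply Nat.leb_le. unfold tail_len, tail0, depth in *. lia.
Qed.

Lemma trunc_node_deep : forall rho q c a s', tree_node q a = true -> a <> [] -> depth rho < length a ->
  trunc_node rho q c (a ++ s') = zeros (skipn (depth rho) a) && zeros s' &&
     (length a - depth rho + length s' <=? tail_len rho c (firstn (depth rho) a)).
Proof.
  intros. unfold trunc_node. rewrite tree_node_app, H; auto. simpl. rewrite length_app.
  replace (length a + length s' <=? depth rho) with false by (symmetry; apply Nat.leb_gt; lia).
  simpl. rewrite skipn_app_ge, firstn_app_ge by lia. unfold zeros at 1. rewrite forallb_app. fold (zeros (skipn (depth rho) a)). fold (zeros s').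
  replace (length a + length s' - depth rho) with (length a - depth rho + length s') by lia.
  destruct (zeros s') eqn:E.
  - rewrite zeros_binary; auto.
  - destruct (binary s'), (zeros (skipn (depth rho) a)); simpl; auto.
Qed.

(* In each case the ball is moved to the fresh odd
   tree c' (or c' of the same parity near the root); the three lemmas treat a
   source of type T4, the part of a truncated tree above the cut, and the
   part below it. *)
Lemma agree_full : forall rho c' a, a <> [] -> tree_node 4 a = true ->
  forall s', length s' <= 2 * rho -> tree_node 4 (a ++ s') = trunc_node rho 3 c' ([0] ++ s').
Proof.
  intros rho c' a Ha HT s' Hs'. rewrite trunc_node_short by (simpl; unfold depth; lia).
  rewrite tree_node_app, HT by auto. rewrite tree_node_app by discriminate. auto.
Qed.

Lemma agree_mid : forall rho q c c' a, 3 <= q -> a <> [] -> tree_node q a = true ->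
  length a <= depth rho -> forall s', length s' <= 2 * rho ->
  trunc_node rho q c (a ++ s') = trunc_node rho 3 c' (repeat 0 (length a) ++ s').
Proof.
  intros rho q c c' a Hq Ha HT Hal s' Hs'.
  rewrite trunc_node_mid by (auto; lia).
  rewrite trunc_node_mid; [|apply tree_node_repeat; lia| |rewrite repeat_length; lia|lia].
  - rewrite repeat_length; auto.
  - destruct a; simpl in *; [congruence|discriminate].
Qed.

Lemma agree_deep : forall rho q c c' a s, q <= 4 -> c < c' -> a <> [] ->
  trunc_node rho q c (a ++ s) = true -> depth rho < length a ->
  exists a', a' <> [] /\ forall s', length s' <= 2 * rho ->
    trunc_node rho q c (a ++ s') = trunc_node rho 3 c' (a' ++ s').
Proof.
  intros rho q c c' a s Hq Hc Ha H Hal.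
  set (R := depth rho) in *. set (L := tail_len rho c (firstn R a)).
  set (L' := tail_len rho c' (repeat 0 R)). set (m := length a - R).
  assert (Hqa : tree_node q a = true).
  { apply andb_true_iff in H. destruct H as [H _]. eapply tree_node_prefix; eauto. }
  assert (Hdeep : zeros (skipn R a) = true /\ m <= L).
  { unfold trunc_node in H. apply andb_true_iff in H. destruct H as [_ H].
    apply orb_true_iff in H. rewrite length_app in H. destruct H as [H|H].
    - apply Nat.leb_le in H; lia.
    - apply andb_true_iff in H. destruct H as [Hz H]. fold R in Hz, H.
      rewrite skipn_app_ge in Hz by lia. unfold zeros in Hz. rewrite forallb_app in Hz.
      apply andb_true_iff in Hz. apply Nat.leb_le in H.
      rewrite firstn_app_ge in H by lia. fold L in H. unfold m; split; [tauto|lia]. }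
  assert (HLL : L <= L').
  { unfold L, L', tail_len. rewrite code4_repeat.
    assert (code4 (firstn R a) < 4 ^ R).
    { replace R with (length (firstn R a)) at 2 by (rewrite length_firstn; lia).
      apply code4_lt. intros i Hi. apply in_firstn in Hi. eapply tree_node_lt4 with (q := q); eauto. }
    set (P := 4 ^ R) in *. change (4 ^ depth rho) with P. nia. }
  destruct Hdeep as [Hz HmL].
  exists (repeat 0 (R + (L' - L + m))). split.
  { destruct (R + (L' - L + m)) eqn:E; simpl; [unfold R, depth in E; lia|discriminate]. }
  intros s' Hs'. rewrite trunc_node_deep by (auto; lia).
  rewrite trunc_node_deep; [|apply tree_node_repeat; lia| |rewrite repeat_length; lia].
  2:{ destruct (R + (L' - L + m)) eqn:E; simpl; [unfold R, depth in E; lia|discriminate]. }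
  fold R. rewrite skipn_repeat, firstn_repeat, zeros_repeat by lia. fold L'.
  rewrite Hz, repeat_length. simpl. fold L. f_equal.
  destruct (Nat.leb_spec (length a - R + length s') L);
    destruct (Nat.leb_spec (R + (L' - L + m) - R + length s') L'); auto; exfalso; unfold m in *; lia.
Qed.

Lemma shift_witness : forall rho r b1 b2 c p M, r <= rho -> fam rho b1 c p = true -> c < M ->
  exists c' a a' s, M <= c' /\ p = a ++ s /\ length s <= r /\
    (length s = r \/ (a = [] /\ a' = [])) /\
    (forall s', length s' <= 2 * r -> fam rho b1 c (a ++ s') = fam rho b2 c' (a' ++ s')).
Proof.
  intros rho r b1 b2 c p M Hr H HM.
  destruct (le_lt_dec (length p) r) as [Ht|Ht].
  - (* near the root: move to a tree of the same parity *)
    exists ((if Nat.even c then 0 else 1) + 2 * M), [], [], p.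
    split; [destruct (Nat.even c); lia|]. split; [auto|]. split; [auto|]. split; [right; auto|].
    intros s' Hs'. cbn [app]. rewrite !fam_short by (unfold depth; lia).
    rewrite Nat.even_add_mul_2. destruct (Nat.even c); auto.
  - set (a := firstn (length p - r) p). set (s := skipn (length p - r) p).
    assert (Hp : p = a ++ s) by (symmetry; apply firstn_skipn).
    assert (Hs : length s = r) by (unfold s; rewrite length_skipn; lia).
    assert (Ha : a <> []).
    { intro E. assert (length a = length p - r) by (unfold a; rewrite length_firstn; lia).
      rewrite E in H0. simpl in H0. lia. }
    assert (Hodd : fam rho b2 (1 + 2 * M) = trunc_node rho 3 (1 + 2 * M))
      by (apply fam_odd; rewrite Nat.even_add_mul_2; auto).
    rewrite Hp in H.
    assert (Hgoal : forall a', (forall s', length s' <= 2 * rho ->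
                                  fam rho b1 c (a ++ s') = trunc_node rho 3 (1 + 2 * M) (a' ++ s')) ->
              exists c' a0 a0' s0, M <= c' /\ p = a0 ++ s0 /\ length s0 <= r /\
                (length s0 = r \/ (a0 = [] /\ a0' = [])) /\
                (forall s', length s' <= 2 * r -> fam rho b1 c (a0 ++ s') = fam rho b2 c' (a0' ++ s'))).
    { intros a' Ha'. exists (1 + 2 * M), a, a', s. split; [lia|]. split; [auto|].
      split; [lia|]. split; [left; auto|]. intros s' Hs'. rewrite Hodd. apply Ha'. lia. }
    destruct (fam_cases rho b1 c) as [HT|[q [Hq HK]]]; rewrite ?HT, ?HK in H.
    + apply (Hgoal [0]). intros; rewrite HT. apply agree_full; auto. eapply tree_node_prefix; eauto.
    + assert (Hqa : tree_node q a = true).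
      { apply andb_true_iff in H. destruct H as [H _]. eapply tree_node_prefix; eauto. }
      destruct (le_lt_dec (length a) (depth rho)) as [Hal|Hal].
      * apply (Hgoal (repeat 0 (length a))). intros; rewrite HK. apply agree_mid; auto; lia.
      * destruct (agree_deep rho q c (1 + 2 * M) a s ltac:(lia) ltac:(lia) Ha H Hal) as [a' [_ Ha']].
        apply (Hgoal a'). intros; rewrite HK. auto.
Qed.

Theorem rich_fam : forall rho r b1 b2, r <= rho -> Rich (Adj (fam rho b1)) (Adj (fam rho b2)) r.
Proof.
  intros rho r b1 b2 Hr. apply rich_of_shifts. intros c p H l2.
  set (cs := map (fun u : Node (fam rho b2) => fst (proj1_sig u)) l2).
  set (M := S (c + list_max cs)).
  destruct (shift_witness rho r b1 b2 c p M Hr H ltac:(unfold M; lia))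
    as [c' [a [a' [s [Hc' [Hp [Hs [Hr' Hsh]]]]]]]].
  exists c', a, a', s. split; [auto|]. split; [|auto].
  intros u Hu E. subst c'.
  assert (Hin : In (fst (proj1_sig u)) cs) by (apply (in_map (fun u : Node (fam rho b2) => fst (proj1_sig u))); auto).
  assert (Hmax : Forall (fun k => k <= list_max cs) cs) by (apply list_max_le; lia).
  rewrite Forall_forall in Hmax. specialize (Hmax _ Hin). unfold M in Hc'. lia.
Qed.

Lemma has_degree_unique : forall {V} (E : V -> V -> Prop) x n m,
  has_degree E x n -> has_degree E x m -> n = m.
Proof.
  intros V E x n m [l [Hl [Hn Hx]]] [l' [Hl' [Hm Hx']]].
  assert (length l <= length l') by (apply NoDup_incl_length; auto; intros y Hy; apply Hx', Hx; auto).
  assert (length l' <= length l) by (apply NoDup_incl_length; auto; intros y Hy; apply Hx, Hx'; auto).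
  lia.
Qed.

Section Automorphisms.
Context {V : Type} (E : V -> V -> Prop).

Lemma automorphism_inv : forall f, automorphism E f ->
  exists g, automorphism E g /\ (forall x, g (f x) = x) /\ (forall x, f (g x) = x).
Proof.
  intros f [[g [Hgf Hfg]] HE]. exists g. split; [|auto].
  split; [exists f; auto|]. intros x y. rewrite (HE (g x) (g y)), !Hfg. tauto.
Qed.

Lemma aut_walk : forall f, automorphism E f ->
  forall x z k, walk E x z k -> walk E (f x) (f z) k.
Proof.
  intros f [_ HE] x z k H; induction H; [constructor|].
  apply walk_cons with (f y); [apply (proj1 (HE x y))|]; auto.
Qed.

Lemma aut_degree : forall f, automorphism E f ->
  forall x n, has_degree E x n -> has_degree E (f x) n.
Proof.
  intros f [[g [Hgf Hfg]] HE] x n [l [Hl [Hn Hx]]]. exists (map f l). split; [|split].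
  - apply FinFun.Injective_map_NoDup; auto. intros a b Hab. rewrite <- (Hgf a), <- (Hgf b), Hab; auto.
  - rewrite length_map; auto.
  - intro y. split; intro H.
    + rewrite <- (Hfg y) in H. apply (proj2 (HE x (g y))) in H. apply Hx in H.
      rewrite <- (Hfg y). apply in_map; auto.
    + apply in_map_iff in H. destruct H as [z [Hz Hz']]. subst y. apply (proj1 (HE x z)). apply Hx; auto.
Qed.
End Automorphisms.

Section ForestDegree.
Variable F : nat -> list nat -> bool.
Hypothesis Hpc : forall c p i, F c (p ++ [i]) = true -> F c p = true.
Hypothesis H4 : forall c p i, F c (p ++ [i]) = true -> i < 4.

Definition opt_list {A} (o : option A) : list A := match o with Some y => [y] | None => [] end.

Definition children (c : nat) (p : list nat) (is : list nat) : list (Node F) :=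
  flat_map (fun i => opt_list (mk_node c (p ++ [i]))) is.

Lemma children_in : forall c p is y, In y (children c p is) <-> exists i, In i is /\ mk_node c (p ++ [i]) = Some y.
Proof.
  intros. unfold children. rewrite in_flat_map. split.
  - intros [i [Hi Hy]]. exists i; split; auto. destruct (mk_node c (p ++ [i])); simpl in Hy; [|tauto].
    destruct Hy; [subst|tauto]; auto.
  - intros [i [Hi Hy]]. exists i; split; auto. rewrite Hy; simpl; auto.
Qed.

Lemma children_nodup : forall c p is, NoDup is -> NoDup (children c p is).
Proof.
  intros c p is H; induction H; simpl; [constructor|].
  destruct (mk_node c (p ++ [x])) eqn:E; simpl; auto. constructor; auto.
  intro Hin. apply children_in in Hin. destruct Hin as [i [Hi Hi']].
  apply mk_node_spec in E, Hi'. rewrite E in Hi'. inversion Hi'. apply app_inj_tail in H2. destruct H2; subst; auto.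
Qed.

Lemma children_length : forall c p is, length (children c p is) = length (filter (fun i => F c (p ++ [i])) is).
Proof.
  intros c p is; induction is; simpl; auto. unfold children in *. simpl.
  destruct (F c (p ++ [a])) eqn:E.
  - destruct (mk_node_some F c _ E) as [y [Hy _]]. rewrite Hy. simpl. rewrite IHis; auto.
  - unfold mk_node. generalize (@eq_refl bool (F c (p ++ [a]))). pattern (F c (p ++ [a])) at 2 3. rewrite E.
    intros. simpl. auto.
Qed.

Definition parent (c : nat) (p : list nat) : list (Node F) :=
  match p with [] => [] | _ => opt_list (mk_node c (removelast p)) end.

Definition nbrs (x : Node F) : list (Node F) :=
  parent (fst (proj1_sig x)) (snd (proj1_sig x)) ++ children (fst (proj1_sig x)) (snd (proj1_sig x)) [0;1;2;3].

Definition deg_count (c : nat) (p : list nat) : nat :=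
  (match p with [] => 0 | _ => 1 end) + length (filter (fun i => F c (p ++ [i])) [0;1;2;3]).

Lemma parent_in : forall c p, F c p = true -> forall y,
  In y (parent c p) <-> (p <> [] /\ proj1_sig y = (c, removelast p)).
Proof.
  intros c p Hx y. unfold parent. destruct p as [|j p'] eqn:Ep; [simpl; split; [tauto|intros [H _]; congruence]|].
  cbv iota beta. rewrite <- Ep in Hx |- *. destruct (exists_last (l := p)) as [p0 [k Hp0]]; [subst; discriminate|].
  assert (Hm : F c p0 = true) by (apply (Hpc c p0 k); rewrite <- Hp0; auto).
  destruct (mk_node_some F c p0 Hm) as [z [Hz Hz']]. rewrite Hp0, removelast_last, Hz. cbn [opt_list In].
  split; [intros [H|H]; [split; [intro E; rewrite E in Hp0; destruct p0; discriminate|rewrite <- H; auto]|tauto]|].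
  intros [_ H]. left. apply node_eq. congruence.
Qed.

Lemma fam_degree : forall x, has_degree (Adj F) x (deg_count (fst (proj1_sig x)) (snd (proj1_sig x))).
Proof.
  intros [[c p] Hx]; simpl in *. exists (nbrs (exist _ (c, p) Hx)). unfold nbrs; cbn [fst snd proj1_sig].
  pose proof (parent_in c p Hx) as Hpar.
  split; [|split].
  - apply NoDup_app; [| |].
    + unfold parent; destruct p; [constructor|]. cbv iota beta.
      match goal with |- NoDup (opt_list ?o) => destruct o end; simpl; repeat constructor; auto.
    + apply children_nodup. repeat constructor; simpl; lia.
    + intros y Hy Hy'. apply Hpar in Hy. apply children_in in Hy'. destruct Hy' as [i [_ Hi]].
      apply mk_node_spec in Hi. destruct Hy as [Hne Hy]. rewrite Hy in Hi. inversion Hi.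
      match goal with H : removelast p = p ++ [i] |- _ => rename H into H1 end.
      apply (f_equal (@length nat)) in H1.
      destruct (exists_last (l := p)) as [p0 [k Hp0]]; [auto|]. rewrite Hp0, removelast_last in H1.
      rewrite !length_app in H1; simpl in H1; lia.
  - rewrite length_app, children_length. unfold deg_count, parent; destruct p as [|j p']; [reflexivity|]. cbv iota beta.
    assert (length (opt_list (@mk_node F c (removelast (j :: p')))) = 1) as ->; [|reflexivity].
    destruct (exists_last (l := j :: p')) as [p0 [k Hp0]]; [discriminate|]. rewrite Hp0, removelast_last.
    assert (Hm : F c p0 = true) by (apply (Hpc c p0 k); rewrite <- Hp0; auto).
    destruct (mk_node_some F c p0 Hm) as [z [Hz Hz']]. rewrite Hz; auto.
  - intros [[cy py] Hy]. unfold Adj; cbn [fst snd proj1_sig]. cbn [fst snd] in Hy. rewrite in_app_iff, Hpar, children_in. cbn [fst snd proj1_sig]. split.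
    + intros [Hc [i [Hi|Hi]]]; subst cy.
      * subst py. right. exists i. split; [pose proof (H4 _ _ _ Hy); simpl; lia|].
        destruct (mk_node_some F c _ Hy) as [z [Hz Hz']]. rewrite Hz. f_equal. apply node_eq. simpl. auto.
      * subst p. left. split; [destruct py; discriminate|]. rewrite removelast_last. auto.
    + intros [[Hne H]|[i [Hi Hmk]]].
      * inversion H; subst cy py. split; auto. destruct (exists_last (l := p)) as [p0 [k Hp0]]; auto.
        exists k; right. rewrite Hp0, removelast_last; auto.
      * apply mk_node_spec in Hmk. simpl in Hmk. inversion Hmk; subst cy py. split; auto. exists i; left; auto.
Qed.

Lemma prefix_closed : forall c a s, F c (a ++ s) = true -> F c a = true.
Proof.
  intros c a s. revert a. induction s using rev_ind; intros a H; [rewrite app_nil_r in H; auto|].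
  apply IHs. apply (Hpc c _ x). rewrite <- app_assoc; auto.
Qed.

Lemma walk_to_prefix : forall c a s (Hx : F c (a ++ s) = true) (Ha : F c a = true),
  walk (Adj F) (exist _ (c, a ++ s) Hx) (exist _ (c, a) Ha) (length s).
Proof.
  intros c a s. revert a. induction s using rev_ind; intros a Hx Ha.
  - simpl. replace (exist (fun x => F (fst x) (snd x) = true) (c, a ++ []) Hx) with
      (exist (fun x => F (fst x) (snd x) = true) (c, a) Ha); [constructor|]. apply node_eq; simpl; rewrite app_nil_r; auto.
  - assert (Hm : F c (a ++ s) = true) by (apply (Hpc c _ x); rewrite <- app_assoc; auto).
    rewrite length_app; simpl. rewrite Nat.add_comm; simpl.
    econstructor; [|apply (IHs a Hm Ha)]. split; simpl; auto. exists x; right. rewrite app_assoc; auto.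
Qed.
End ForestDegree.

Lemma chain_nth : forall {V} (E : V -> V -> Prop) l, chain E l -> forall i d, S i < length l ->
  E (nth i l d) (nth (S i) l d).
Proof.
  intros V E l; induction l as [|a l IH]; simpl; intros H i d Hi; [lia|].
  destruct l as [|b l]; simpl in *; [lia|]. destruct H as [H1 H2]. destruct i; auto.
  apply (IH H2 i d); simpl; lia.
Qed.

Lemma nth_last : forall {V} (l : list V) x d, nth (length l) (x :: l) d = last l x.
Proof. intros V l; induction l; intros; simpl; auto. destruct l; simpl in *; auto. Qed.

Lemma cycle_nbrs : forall {V} (E : V -> V -> Prop) x l, 2 <= length l ->
  chain E (x :: l) -> E (last l x) x -> forall i, i < S (length l) ->
  exists ip jn, ip < S (length l) /\ jn < S (length l) /\ ip <> jn /\
    E (nth ip (x :: l) x) (nth i (x :: l) x) /\ E (nth i (x :: l) x) (nth jn (x :: l) x).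
Proof.
  intros V E x l Hl Hch Hcl i Hi. set (m := S (length l)).
  assert (Cyc : forall j, j < m -> E (nth j (x :: l) x) (nth (if Nat.eq_dec j (m - 1) then 0 else S j) (x :: l) x)).
  { intros j Hj. destruct (Nat.eq_dec j (m - 1)).
    - subst j. replace (m - 1) with (length l) by lia. rewrite nth_last. simpl. auto.
    - apply chain_nth; auto. simpl. lia. }
  exists (if Nat.eq_dec i 0 then m - 1 else i - 1), (if Nat.eq_dec i (m - 1) then 0 else S i).
  split; [destruct (Nat.eq_dec i 0); lia|]. split; [destruct (Nat.eq_dec i (m - 1)); lia|].
  split; [destruct (Nat.eq_dec i 0), (Nat.eq_dec i (m - 1)); lia|]. split; [|apply Cyc; auto].
  destruct (Nat.eq_dec i 0) as [->|Hi0].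
  - pose proof (Cyc (m - 1) ltac:(lia)) as H. destruct (Nat.eq_dec (m - 1) (m - 1)); [auto|lia].
  - pose proof (Cyc (i - 1) ltac:(lia)) as H. destruct (Nat.eq_dec (i - 1) (m - 1)); [lia|].
    replace (S (i - 1)) with i in H by lia. auto.
Qed.

Lemma exists_argmax : forall (D : nat -> nat) m, 0 < m -> exists i, i < m /\ forall j, j < m -> D j <= D i.
Proof.
  intros D m; induction m; intros H; [lia|]. destruct m.
  - exists 0; split; auto; intros; assert (j = 0) by lia; subst; auto.
  - destruct IHm as [i [Hi Hj]]; [lia|]. destruct (le_lt_dec (D (S m)) (D i)).
    + exists i; split; [lia|]. intros j Hj'. destruct (Nat.eq_dec j (S m)); subst; auto. apply Hj; lia.
    + exists (S m); split; [lia|]. intros j Hj'. destruct (Nat.eq_dec j (S m)); subst; auto. specialize (Hj j ltac:(lia)); lia.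
Qed.

Lemma Adj_parent_unique : forall F (x u w : Node F),
  (Adj F u x \/ Adj F x u) -> (Adj F w x \/ Adj F x w) ->
  length (snd (proj1_sig u)) <= length (snd (proj1_sig x)) ->
  length (snd (proj1_sig w)) <= length (snd (proj1_sig x)) -> u = w.
Proof.
  intros F x u w Hu Hw Hlu Hlw.
  assert (Par : forall v, (Adj F v x \/ Adj F x v) -> length (snd (proj1_sig v)) <= length (snd (proj1_sig x)) ->
     fst (proj1_sig v) = fst (proj1_sig x) /\ exists k, snd (proj1_sig x) = snd (proj1_sig v) ++ [k]).
  { intros v Hv HD. destruct Hv as [[Hf [k [Hk|Hk]]]|[Hf [k [Hk|Hk]]]].
    - split; auto; exists k; auto.
    - rewrite Hk, length_app in HD; simpl in HD; lia.
    - rewrite Hk, length_app in HD; simpl in HD; lia.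
    - split; auto; exists k; auto. }
  destruct (Par u Hu Hlu) as [F1 [k1 K1]]. destruct (Par w Hw Hlw) as [F2 [k2 K2]].
  rewrite K1 in K2. apply app_inj_tail in K2. destruct K2 as [K2 _].
  apply node_eq. destruct (proj1_sig u), (proj1_sig w); simpl in *; congruence.
Qed.

(* Forests are acyclic: on a cycle, a longest vertex would have two parents. *)
Lemma fam_acyclic : forall F, ~ has_cycle (Adj F).
Proof.
  intros F [x [l [Hnd [Hl [Hch Hcl]]]]].
  set (D := fun j => length (snd (proj1_sig (nth j (x :: l) x)))).
  destruct (exists_argmax D (S (length l)) ltac:(lia)) as [i [Hi Hmax]].
  destruct (cycle_nbrs (Adj F) x l Hl Hch Hcl i Hi) as [ip [jn [Hip [Hjn [Hne [A1 A2]]]]]].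
  apply Hne. apply (proj1 (NoDup_nth (x :: l) x)); auto.
  apply (Adj_parent_unique F (nth i (x :: l) x)); [left; auto|right; auto|apply Hmax|apply Hmax]; auto.
Qed.

Section Degrees.
Variable rho : nat.
Notation R := (depth rho).

Lemma depth_ge2 : 2 <= R.
Proof. unfold depth; lia. Qed.

Lemma tree_node_pc : forall q p i, tree_node q (p ++ [i]) = true -> tree_node q p = true.
Proof.
  intros q [|j p] i H; auto. rewrite tree_node_app in H by discriminate. apply andb_true_iff in H; tauto.
Qed.

Lemma trunc_node_pc : forall q c p i, trunc_node rho q c (p ++ [i]) = true -> trunc_node rho q c p = true.
Proof.
  intros q c p i H. unfold trunc_node in *. apply andb_true_iff in H. destruct H as [H1 H2].
  apply andb_true_iff; split; [eapply tree_node_pc; eauto|].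
  destruct (le_lt_dec (length p) R) as [Hl|Hl]; [apply orb_true_iff; left; apply Nat.leb_le; auto|].
  apply orb_true_iff in H2. rewrite length_app in H2; simpl in H2. destruct H2 as [H2|H2]; [apply Nat.leb_le in H2; lia|].
  apply andb_true_iff in H2. destruct H2 as [H2 H3]. rewrite skipn_app_ge in H2 by lia.
  rewrite firstn_app_ge in H3 by lia. apply orb_true_iff; right. unfold zeros in H2. rewrite forallb_app in H2.
  apply andb_true_iff in H2. apply andb_true_iff; split; [tauto|]. apply Nat.leb_le in H3; apply Nat.leb_le; lia.
Qed.

Lemma fam_pc : forall b c p i, fam rho b c (p ++ [i]) = true -> fam rho b c p = true.
Proof.
  intros b c p i. destruct (fam_cases rho b c) as [H|[q [_ H]]]; rewrite H; [apply tree_node_pc|apply trunc_node_pc].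
Qed.

Lemma trunc_node_tree : forall q c p, trunc_node rho q c p = true -> tree_node q p = true.
Proof. unfold trunc_node; intros; apply andb_true_iff in H; tauto. Qed.

Lemma fam_lt4 : forall b c p i, fam rho b c (p ++ [i]) = true -> i < 4.
Proof.
  intros b c p i H. assert (Hin : In i (p ++ [i])) by (apply in_or_app; simpl; auto).
  destruct (fam_cases rho b c) as [E|[q [Hq E]]]; rewrite E in H.
  - apply (tree_node_lt4 4 (p ++ [i])); auto.
  - apply trunc_node_tree in H. apply (tree_node_lt4 q (p ++ [i])); auto; lia.
Qed.

Lemma fam_root : forall b c, fam rho b c [] = true.
Proof.
  intros b c. destruct (fam_cases rho b c) as [E|[q [Hq E]]]; rewrite E; auto.
Qed.

Lemma fam_has_degree : forall b (x : Node (fam rho b)),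
  has_degree (Adj (fam rho b)) x (deg_count (fam rho b) (fst (proj1_sig x)) (snd (proj1_sig x))).
Proof. intros; apply fam_degree; [intros; eapply fam_pc; eauto|intros; eapply fam_lt4; eauto]. Qed.

Lemma fam_degree_eq : forall b (x : Node (fam rho b)) n, has_degree (Adj (fam rho b)) x n ->
  n = deg_count (fam rho b) (fst (proj1_sig x)) (snd (proj1_sig x)).
Proof. intros b x n H. eapply has_degree_unique; eauto. apply fam_has_degree. Qed.

Definition root (b : bool) (c : nat) : Node (fam rho b) := exist _ (c, []) (fam_root b c).

Lemma filt_le2 : forall f : nat -> bool, f 2 = false -> f 3 = false -> length (filter f [0;1;2;3]) <= 2.
Proof. intros f H2 H3. simpl. rewrite H2, H3. destruct (f 0), (f 1); simpl; lia. Qed.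

Lemma filt_le1 : forall f : nat -> bool, f 1 = false -> f 2 = false -> f 3 = false -> length (filter f [0;1;2;3]) <= 1.
Proof. intros f H1 H2 H3. simpl. rewrite H1, H2, H3. destruct (f 0); simpl; lia. Qed.

Lemma filt_0 : forall f : nat -> bool, f 0 = false -> f 1 = false -> f 2 = false -> f 3 = false -> length (filter f [0;1;2;3]) = 0.
Proof. intros f H0 H1 H2 H3. simpl. rewrite H0, H1, H2, H3. auto. Qed.

Lemma deg_root : forall b c, deg_count (fam rho b) c [] = if Nat.even c then 4 else 3.
Proof.
  intros b c. unfold deg_count. simpl. rewrite !fam_short by (simpl; pose proof depth_ge2; lia).
  destruct (Nat.even c); reflexivity.
Qed.

Lemma deg_inner : forall b c p, fam rho b c p = true -> p <> [] -> length p < R ->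
  deg_count (fam rho b) c p = 3.
Proof.
  intros b c p H Hne Hl. unfold deg_count. destruct p as [|j p']; [congruence|].
  remember (j :: p') as p eqn:Ep. rewrite fam_short in H by lia.
  rewrite (filter_ext_in _ (fun i => i <? 2)).
  - simpl; auto.
  - intros i _. rewrite fam_short by (rewrite length_app; simpl; lia). rewrite tree_node_app, H; auto. simpl.
    rewrite andb_true_r; auto.
Qed.

Lemma deg_M_even : forall c p, Nat.even c = true -> fam rho false c p = true -> p <> [] ->
  deg_count (fam rho false) c p = 3.
Proof.
  intros c p He H Hne. assert (E : fam rho false c = tree_node 4) by (unfold fam, famM; rewrite He; auto).
  unfold deg_count. destruct p as [|j p']; [congruence|]. remember (j :: p') as p eqn:Ep. rewrite E in H |- *.
  rewrite (filter_ext_in _ (fun i => i <? 2)).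
  - simpl; auto.
  - intros i _. rewrite tree_node_app, H; auto. simpl. rewrite andb_true_r; auto.
Qed.

Lemma deg_odd_le3 : forall b c p, Nat.even c = false -> fam rho b c p = true -> deg_count (fam rho b) c p <= 3.
Proof.
  intros b c p He H. destruct p as [|j p']; [rewrite deg_root, He; auto|].
  assert (H0 : forall i, 2 <= i -> fam rho b c ((j :: p') ++ [i]) = false).
  { intros i Hi. rewrite fam_odd by auto. destruct (trunc_node rho 3 c ((j :: p') ++ [i])) eqn:E; auto. apply trunc_node_tree in E.
    rewrite tree_node_app in E by discriminate. apply andb_true_iff in E. destruct E as [_ E]. simpl in E.
    rewrite andb_true_r in E. apply Nat.ltb_lt in E. lia. }
  unfold deg_count.
  pose proof (filt_le2 (fun i => fam rho b c ((j :: p') ++ [i])) (H0 2 ltac:(lia)) (H0 3 ltac:(lia))). lia.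
Qed.

Lemma famN_trunc : forall c, exists q, 3 <= q <= 4 /\ fam rho true c = trunc_node rho q c.
Proof. intros c. unfold fam, famN. destruct (Nat.even c); [exists 4|exists 3]; split; auto; lia. Qed.

Lemma deg_deep_le2 : forall c p, fam rho true c p = true -> R <= length p -> deg_count (fam rho true) c p <= 2.
Proof.
  intros c p H Hl. destruct (famN_trunc c) as [q [Hq E]].
  destruct p as [|j p']; [simpl in Hl; pose proof depth_ge2; lia|].
  assert (H0 : forall i, 1 <= i -> fam rho true c ((j :: p') ++ [i]) = false).
  { intros i Hi. rewrite E. destruct (trunc_node rho q c ((j :: p') ++ [i])) eqn:E2; auto. unfold trunc_node in E2.
    apply andb_true_iff in E2. destruct E2 as [_ E2]. apply orb_true_iff in E2. rewrite length_app in E2; simpl length in E2.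
    destruct E2 as [E2|E2]; [apply Nat.leb_le in E2; simpl length in Hl; lia|]. apply andb_true_iff in E2; destruct E2 as [E2 _].
    rewrite skipn_app_ge in E2 by (simpl length in *; lia). unfold zeros in E2; rewrite forallb_app in E2. simpl forallb in E2.
    destruct i; [lia|]. rewrite andb_false_r in E2; discriminate. }
  unfold deg_count.
  pose proof (filt_le1 (fun i => fam rho true c ((j :: p') ++ [i])) (H0 1 ltac:(lia)) (H0 2 ltac:(lia)) (H0 3 ltac:(lia))). lia.
Qed.
End Degrees.

Lemma zeros_snoc0 : forall l, zeros (l ++ [0]) = zeros l.
Proof. intros; unfold zeros; rewrite forallb_app; simpl; rewrite !andb_true_r; auto. Qed.

(** * Rigidity of N *)

Section Rigid.
Variable rho : nat.
Notation R := (depth rho).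
Notation SNf := (fam rho true).
Notation VN := (Node (fam rho true)).
Notation EN := (Adj (fam rho true)).

(* The length of the tail below the ancestor at depth R of (c, p); the leaves
   are the ends of these tails. *)
Definition tail_of (c : nat) (p : list nat) := tail_len rho c (firstn R p).
Definition is_leaf (c : nat) (p : list nat) := R <= length p /\ length p - R = tail_of c p.

Lemma child0 : forall c p, SNf c p = true -> ~ is_leaf c p -> SNf c (p ++ [0]) = true.
Proof.
  intros c p H Hnl. destruct (famN_trunc rho c) as [q [Hq E]]. rewrite E in *.
  destruct (le_lt_dec R (length p)) as [Hl|Hl].
  - unfold trunc_node in *. apply andb_true_iff in H. destruct H as [HT H].
    apply andb_true_iff; split.
    + destruct p as [|j p']; [simpl in Hl; pose proof (depth_ge2 rho); lia|]. rewrite tree_node_app by discriminate. rewrite HT; auto.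
    + apply orb_true_iff; right. rewrite skipn_app_ge, firstn_app_ge by lia. rewrite length_app; simpl length.
      rewrite zeros_snoc0.
      apply orb_true_iff in H. destruct H as [H|H].
      * apply Nat.leb_le in H. assert (length p = R) by lia. rewrite skipn_all2 by lia. simpl.
        apply Nat.leb_le. unfold tail_len, tail0. lia.
      * apply andb_true_iff in H. destruct H as [H1 H2]. rewrite H1. simpl. apply Nat.leb_le in H2. apply Nat.leb_le.
        unfold is_leaf, tail_of in Hnl. lia.
  - rewrite trunc_node_short by (rewrite length_app; simpl; lia). apply trunc_node_tree in H.
    destruct p as [|j p']; [simpl; destruct q; [lia|]; auto|]. rewrite tree_node_app, H by discriminate. auto.
Qed.

Lemma leaf_degree : forall c p, SNf c p = true -> is_leaf c p -> deg_count SNf c p = 1.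
Proof.
  intros c p H [Hl HL]. destruct (famN_trunc rho c) as [q [Hq E]].
  destruct p as [|j p']; [simpl in Hl; pose proof (depth_ge2 rho); lia|].
  unfold deg_count. rewrite filt_0; auto.
  all: rewrite E; unfold trunc_node; apply andb_false_iff; right; apply orb_false_iff; split;
    [apply Nat.leb_gt; rewrite length_app; simpl length in *; lia|].
  all: apply andb_false_iff; right; apply Nat.leb_gt; rewrite firstn_app_ge by (simpl length in *; lia);
    rewrite length_app; fold (tail_of c (j :: p')); simpl length in *; lia.
Qed.

Lemma degree1_leaf : forall c p, SNf c p = true -> deg_count SNf c p = 1 -> is_leaf c p.
Proof.
  intros c p H Hd. destruct (classic (is_leaf c p)) as [Hl|Hnl]; auto. exfalso.
  pose proof (child0 c p H Hnl) as Hc.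
  destruct p as [|j p'].
  - rewrite deg_root in Hd. destruct (Nat.even c); lia.
  - unfold deg_count in Hd. cbn [filter] in Hd. rewrite Hc in Hd. cbn [length] in Hd. lia.
Qed.

Lemma length_bound : forall c p, SNf c p = true -> length p <= R + tail_of c p.
Proof.
  intros c p H. destruct (famN_trunc rho c) as [q [Hq E]]. rewrite E in H. unfold trunc_node in H.
  apply andb_true_iff in H. destruct H as [_ H]. apply orb_true_iff in H. destruct H as [H|H].
  - apply Nat.leb_le in H; lia.
  - apply andb_true_iff in H; destruct H as [_ H]. apply Nat.leb_le in H. unfold tail_of; lia.
Qed.

Lemma entries_lt4 : forall c p, SNf c p = true -> forall i, In i p -> i < 4.
Proof.
  intros c p H. destruct (famN_trunc rho c) as [q [Hq E]]. rewrite E in H. apply trunc_node_tree in H.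
  intros; eapply (tree_node_lt4 q); eauto; lia.
Qed.

Lemma code4_prefix_lt : forall c p, SNf c p = true -> R <= length p -> code4 (firstn R p) < 4 ^ R.
Proof.
  intros c p H Hl. replace R with (length (firstn R p)) at 2 by (rewrite length_firstn; lia).
  apply code4_lt. intros i Hi. apply in_firstn in Hi. apply (entries_lt4 c p H); auto.
Qed.


Lemma tail_of_lt : forall c p, SNf c p = true -> tail_of c p < tail0 rho + 4 ^ R * S c.
Proof.
  intros c p H. unfold tail_of, tail_len.
  assert (code4 (firstn R p) < 4 ^ R).
  { destruct (le_lt_dec R (length p)).
    - apply (code4_prefix_lt c p H); lia.
    - assert (code4 (firstn R p) < 4 ^ length (firstn R p)).
      { apply code4_lt. intros i Hi. apply in_firstn in Hi. eapply entries_lt4; eauto. }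
      rewrite length_firstn in H0. assert (4 ^ Nat.min R (length p) <= 4 ^ R) by (apply Nat.pow_le_mono_r; lia). lia. }
  set (P := 4 ^ R) in *. nia.
Qed.

Lemma deep_zeros : forall c q, SNf c q = true -> R < length q -> zeros (skipn R q) = true.
Proof.
  intros c q Hq Hlq. destruct (famN_trunc rho c) as [qq [_ E]]. rewrite E in Hq. unfold trunc_node in Hq.
  apply andb_true_iff in Hq. destruct Hq as [_ Hq]. apply orb_true_iff in Hq. destruct Hq as [Hq|Hq].
  - apply Nat.leb_le in Hq; lia.
  - apply andb_true_iff in Hq; tauto.
Qed.

(* Tail lengths determine the leaf: they encode the tree and the prefix. *)
Lemma leaf_inj : forall c p c' p', SNf c p = true -> SNf c' p' = true -> is_leaf c p -> is_leaf c' p' ->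
  tail_of c p = tail_of c' p' -> c = c' /\ p = p'.
Proof.
  intros c p c' p' H H' [Hl HL] [Hl' HL'] HE.
  pose proof (code4_prefix_lt c p H Hl) as Hn1. pose proof (code4_prefix_lt c' p' H' Hl') as Hn2.
  unfold tail_of, tail_len in HE. set (P := 4 ^ R) in *.
  assert (c = c').
  { destruct (lt_eq_lt_dec c c') as [[Hc|Hc]|Hc]; auto; exfalso.
    - assert (P * c + P <= P * c') by nia. lia.
    - assert (P * c' + P <= P * c) by nia. lia. }
  subst c'. split; auto.
  assert (Hb : firstn R p = firstn R p').
  { apply code4_inj; [rewrite !length_firstn; lia| | |lia];
    intros i Hi; apply in_firstn in Hi; [apply (entries_lt4 c p H)|apply (entries_lt4 c p' H')]; auto. }
  assert (tail_of c p >= 1) by (unfold tail_of, tail_len, tail0; lia).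
  assert (tail_of c p' >= 1) by (unfold tail_of, tail_len, tail0; lia).
  rewrite <- (firstn_skipn R p), <- (firstn_skipn R p'). rewrite Hb. f_equal.
  rewrite (zeros_eq_repeat (skipn R p)), (zeros_eq_repeat (skipn R p')); try (eapply deep_zeros; eauto; lia).
  rewrite !length_skipn. f_equal. unfold tail_of, tail_len in *. fold P in HL, HL'. rewrite Hb in HL. lia.
Qed.

(* x is a leaf whose nearest vertex of degree >= 3 is at distance k: an
   automorphism invariant. *)
Definition stem_len {V} (E : V -> V -> Prop) (x : V) (k : nat) : Prop :=
  has_degree E x 1 /\ (exists z n, walk E x z k /\ 3 <= n /\ has_degree E z n) /\
  (forall z j n, j < k -> walk E x z j -> has_degree E z n -> n <= 2).

Lemma stem_len_unique : forall {V} (E : V -> V -> Prop) x k k', stem_len E x k -> stem_len E x k' -> k = k'.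
Proof.
  intros V E x k k' [_ [[z [n [Hw [Hn Hd]]]] H3]] [_ [[z' [n' [Hw' [Hn' Hd']]]] H3']].
  destruct (lt_eq_lt_dec k k') as [[H|H]|H]; auto; exfalso.
  - specialize (H3' z k n H Hw Hd). lia.
  - specialize (H3 z' k' n' H Hw' Hd'). lia.
Qed.

Lemma stem_len_aut : forall {V} (E : V -> V -> Prop) f, automorphism E f ->
  forall x k, stem_len E x k -> stem_len E (f x) k.
Proof.
  intros V E f Hf x k [H1 [[z [n [Hw [Hn Hd]]]] H3]].
  destruct (automorphism_inv E f Hf) as [g [Hg [Hgf _]]]. split; [|split].
  - apply (aut_degree E f Hf); auto.
  - exists (f z), n. split; [apply (aut_walk E f Hf); auto|]. split; auto. apply (aut_degree E f Hf); auto.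
  - intros z' j n' Hj Hw' Hd'. apply (H3 (g z') j n' Hj).
    + rewrite <- (Hgf x). apply (aut_walk E g Hg); auto.
    + apply (aut_degree E g Hg); auto.
Qed.

Lemma stem_len_of_leaf : forall (x : VN), is_leaf (fst (proj1_sig x)) (snd (proj1_sig x)) ->
  stem_len EN x (S (tail_of (fst (proj1_sig x)) (snd (proj1_sig x)))).
Proof.
  intros [[c p] H] HL. cbn [fst snd proj1_sig] in *. pose proof HL as [Hl HLL].
  split; [|split].
  - pose proof (fam_has_degree rho true (exist _ (c, p) H)). cbn [fst snd proj1_sig] in H0. rewrite leaf_degree in H0; auto.
  - set (a := firstn (R - 1) p). set (s := skipn (R - 1) p).
    assert (Hp : p = a ++ s) by (symmetry; apply firstn_skipn).
    assert (Ha : SNf c a = true) by (apply (prefix_closed _ (fun c p i => fam_pc rho true c p i)) with s; rewrite <- Hp; auto).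
    assert (Hs : length s = S (tail_of c p)) by (unfold s; rewrite length_skipn; pose proof (depth_ge2 rho); lia).
    assert (Hx : SNf c (a ++ s) = true) by (rewrite <- Hp; auto).
    exists (exist _ (c, a) Ha), 3. split; [|split; [lia|]].
    + replace (exist (fun x => SNf (fst x) (snd x) = true) (c, p) H) with
        (exist (fun x => SNf (fst x) (snd x) = true) (c, a ++ s) Hx) by (apply node_eq; simpl; rewrite <- Hp; auto).
      rewrite <- Hs. apply walk_to_prefix. intros; eapply fam_pc; eauto.
    + pose proof (fam_has_degree rho true (exist _ (c, a) Ha)) as Hd. cbn [fst snd proj1_sig] in Hd. rewrite deg_inner in Hd; auto.
      * unfold a; intro E. apply (f_equal (@length nat)) in E. rewrite length_firstn in E. simpl in E. pose proof (depth_ge2 rho); lia.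
      * unfold a; rewrite length_firstn; pose proof (depth_ge2 rho); lia.
  - intros z j n Hj Hw Hd. apply fam_degree_eq in Hd. subst n.
    destruct z as [[cz pz] Hz]; simpl in *.
    apply walk_length in Hw. simpl in Hw. apply deg_deep_le2; auto. lia.
Qed.

Lemma leaves_fixed : forall f, automorphism EN f -> forall x, has_degree EN x 1 -> f x = x.
Proof.
  intros f Hf x Hd.
  assert (Hx : is_leaf (fst (proj1_sig x)) (snd (proj1_sig x))).
  { apply fam_degree_eq in Hd. apply degree1_leaf; auto. apply (proj2_sig x). }
  assert (Hfx : is_leaf (fst (proj1_sig (f x))) (snd (proj1_sig (f x)))).
  { apply degree1_leaf; [apply (proj2_sig (f x))|]. symmetry; apply fam_degree_eq.
    apply (aut_degree EN f Hf); auto. }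
  pose proof (stem_len_aut EN f Hf _ _ (stem_len_of_leaf x Hx)) as Qfx.
  pose proof (stem_len_unique _ _ _ _ Qfx (stem_len_of_leaf (f x) Hfx)) as Hk. injection Hk; intro Hk'.
  destruct (leaf_inj _ _ _ _ (proj2_sig x) (proj2_sig (f x)) Hx Hfx Hk') as [H1 H2].
  apply node_eq. destruct (proj1_sig x), (proj1_sig (f x)); simpl in *; congruence.
Qed.

Definition height_bound (c : nat) := R + tail0 rho + 4 ^ R * S c + 1.

(* By induction on the height above the leaves: a non-leaf x has the child
   w = x ++ [0], fixed by induction; f x is then a neighbour of w, either its
   parent x or one of its (fixed) children, and the latter is impossible. *)
Lemma N_rigid : rigid VN EN.
Proof.
  intros f Hf. destruct (automorphism_inv EN f Hf) as [g [_ [Hgf _]]]. pose proof Hf as [_ HE].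
  assert (Main : forall n x, height_bound (fst (proj1_sig x)) - length (snd (proj1_sig x)) <= n -> f x = x).
  { induction n; intros x Hn.
    - exfalso. destruct x as [[c p] H]; simpl in *. pose proof (length_bound c p H). pose proof (tail_of_lt c p H).
      unfold height_bound in Hn. lia.
    - destruct (classic (is_leaf (fst (proj1_sig x)) (snd (proj1_sig x)))) as [Hl|Hnl].
      + apply leaves_fixed; auto. pose proof (fam_has_degree rho true x) as H.
        rewrite leaf_degree in H; auto. apply (proj2_sig x).
      + destruct x as [[c p] H]; cbn [fst snd proj1_sig] in *.
        pose proof (child0 c p H Hnl) as Hc.
        pose proof (length_bound c p H). pose proof (tail_of_lt c p H).
        set (x := exist (fun x => SNf (fst x) (snd x) = true) (c, p) H).
        set (w := exist (fun x => SNf (fst x) (snd x) = true) (c, p ++ [0]) Hc).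
        assert (Hw : f w = w) by (apply IHn; cbn [fst snd proj1_sig w]; rewrite length_app; simpl length; unfold height_bound in *; lia).
        assert (Exw : EN x w) by (split; auto; exists 0; left; auto).
        apply (proj1 (HE x w)) in Exw. rewrite Hw in Exw.
        destruct Exw as [Hf' [j [Hj|Hj]]]; cbn [fst snd proj1_sig x w] in Hf', Hj.
        * apply app_inj_tail in Hj. destruct Hj as [Hj _]. apply node_eq. cbn [proj1_sig x].
          destruct (proj1_sig (f x)); cbn [fst snd] in *; congruence.
        * assert (Hy : f (f x) = f x).
          { apply IHn. rewrite Hf', Hj. rewrite !length_app. simpl length. unfold height_bound in *; lia. }
          rewrite <- (Hgf (f x)), Hy; auto. }
  intro x. apply (Main (height_bound (fst (proj1_sig x)) - length (snd (proj1_sig x))) x). lia.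
Qed.
End Rigid.


(** * M is a model of Gamma *)

Section MClass.
Variable rho : nat.
Notation SMf := (fam rho false).
Notation VM := (Node (fam rho false)).
Notation EM := (Adj (fam rho false)).

Lemma M_many_deg4 : forall k, exists l : list VM, NoDup l /\ k <= length l /\
  forall v, In v l -> has_degree EM v 4.
Proof.
  intros k. exists (map (fun j => root rho false (2 * j)) (seq 0 k)). split; [|split].
  - apply Injective_map_NoDup; [|apply seq_NoDup]. intros j j' E.
    apply (f_equal (@proj1_sig _ _)) in E. simpl in E. inversion E. lia.
  - rewrite length_map, length_seq; auto.
  - intros v Hv. apply in_map_iff in Hv. destruct Hv as [j [Hj _]]. subst v.
    pose proof (fam_has_degree rho false (root rho false (2 * j))) as H. cbn [root fst snd proj1_sig] in H.
    rewrite deg_root in H. replace (Nat.even (2 * j)) with true in H; auto.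
    rewrite <- (Nat.add_0_l (2 * j)), Nat.even_add_mul_2; auto.
Qed.

(* The vertices of degree 4 are the even roots, and the other vertices of
   their trees have degree 3. *)
Lemma M_deg3_near_deg4 : forall k, 0 < k -> forall x y : VM,
  has_degree EM y 4 -> distance EM y x k -> has_degree EM x 3.
Proof.
  intros k Hk x y Hy [Hw Hmin].
  apply fam_degree_eq in Hy. destruct y as [[cy py] Hpy]. cbn [fst snd proj1_sig] in *.
  destruct (Nat.even cy) eqn:Ev; [|pose proof (deg_odd_le3 rho false cy py Ev Hpy); lia].
  destruct py as [|j p']; [|rewrite deg_M_even in Hy; auto; discriminate].
  assert (Hx : fst (proj1_sig x) = cy) by (apply walk_same_tree in Hw; simpl in Hw; auto).
  destruct x as [[cx px] Hpx]. cbn [fst snd proj1_sig] in *. subst cx.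
  destruct px as [|j p'].
  - exfalso. assert (E : exist (fun x => SMf (fst x) (snd x) = true) (cy, []) Hpx =
                          exist (fun x => SMf (fst x) (snd x) = true) (cy, []) Hpy) by (apply node_eq; auto).
    rewrite E in Hw, Hmin. specialize (Hmin 0 (walk_nil _ _)). lia.
  - pose proof (fam_has_degree rho false (exist _ (cy, j :: p') Hpx)) as Hd. cbn [fst snd proj1_sig] in Hd.
    rewrite deg_M_even in Hd; auto. discriminate.
Qed.

Lemma M_in_class : in_class VM EM.
Proof.
  split; [split; [apply Adj_irrefl|apply Adj_sym]|]. split; [apply fam_acyclic|].
  intros k Hk. split; [apply M_many_deg4|]. intros; eapply M_deg3_near_deg4; eauto.
Qed.
End MClass.

Lemma qdepth_max : forall (Delta : list formula) phi, In phi Delta ->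
  qdepth phi <= fold_right Nat.max 0 (map qdepth Delta).
Proof. induction Delta; simpl; intros; [tauto|]. destruct H; subst; [lia|]. apply IHDelta in H; lia. Qed.

Lemma N_M_equiv : forall d phi, sentence phi -> qdepth phi <= d ->
  forall env1 env2, sat (Adj (fam (radius d) true)) env1 phi <-> sat (Adj (fam (radius d) false)) env2 phi.
Proof.
  intros d phi Hphi Hd env1 env2. set (rho := radius d) in *.
  destruct (match_init (Adj (fam rho true)) (Adj (fam rho false)) d (root rho true 0)
     (rich_fam rho (radius d) true false (le_n _))) as [v2 HI].
  assert (HG := match_wins _ _ (Adj_sym _) (Adj_sym _) d
     (fun m Hm => conj (rich_fam rho (radius m) true false (radius_mono m d ltac:(lia)))
                       (rich_fam rho (radius m) false true (radius_mono m d ltac:(lia)))) _ _ HI).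
  rewrite (sentence_env _ phi env1 (fun _ => root rho true 0)) by auto.
  rewrite (sentence_env _ phi env2 (fun _ => v2)) by auto.
  apply (ef_win_sat _ _ phi d _ _ HG Hd).
Qed.

Theorem rigid_models : forall (Gamma : formula -> Prop)
  (Hsent : forall phi, Gamma phi -> sentence phi)
  (Hmod : forall (V : Type) (E : V -> V -> Prop), is_model V E Gamma <-> in_class V E),
  forall Delta : list formula,
     (forall phi, In phi Delta -> Gamma phi) ->
     exists (V : Type) (E : V -> V -> Prop),
       is_model V E (fun phi => In phi Delta) /\ rigid V E.
Proof.
  intros Gamma Hsent Hmod Delta HD.
  set (d := fold_right Nat.max 0 (map qdepth Delta)).
  assert (HM : is_model (Node (fam (radius d) false)) (Adj (fam (radius d) false)) Gamma)
    by (apply Hmod; apply M_in_class).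
  exists (Node (fam (radius d) true)), (Adj (fam (radius d) true)). split; [|apply N_rigid].
  split; [constructor; exact (root (radius d) true 0)|].
  intros phi Hphi env.
  rewrite (N_M_equiv d phi (Hsent phi (HD phi Hphi)) (qdepth_max Delta phi Hphi) env (fun _ => root (radius d) false 0)).
  apply (proj2 HM); auto.
Qed.

(** * Part (2): the components of degree-4 vertices in a model of Gamma *)

Section Tree.
Context {V : Type} (E : V -> V -> Prop).
Hypothesis HC : in_class V E.

Lemma model_irrefl : forall x, ~ E x x.
Proof. apply HC. Qed.
Lemma model_sym : forall x y, E x y -> E y x.
Proof. apply HC. Qed.
Lemma model_acyclic : ~ has_cycle E.
Proof. apply HC. Qed.

Definition reach (y x : V) := exists k, walk E y x k.
Definition deg4 (y : V) := has_degree E y 4.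

Lemma min_nat : forall (P : nat -> Prop) n, P n -> exists m, P m /\ forall m', P m' -> m <= m'.
Proof.
  intros P n. induction n as [n IH] using (well_founded_induction lt_wf). intros Hn.
  destruct (classic (exists m', m' < n /\ P m')) as [[m' [Hm' Pm']]|Hno].
  - apply (IH m'); auto.
  - exists n; split; auto. intros m' Pm'. destruct (le_lt_dec n m'); auto. exfalso; apply Hno; eauto.
Qed.

Lemma reach_deg3 : forall y x, deg4 y -> reach y x -> x <> y -> has_degree E x 3.
Proof.
  intros y x Hy [k Hk] Hne. destruct (min_nat (fun k => walk E y x k) k Hk) as [m [Hm Hmin]].
  destruct m. { apply walk_0 in Hm; congruence. }
  apply (proj2 (proj2 (proj2 HC) (S m) ltac:(lia)) x y Hy). split; auto.
Qed.

Lemma deg4_sep : forall y y', deg4 y -> deg4 y' -> reach y y' -> y = y'.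
Proof.
  intros y y' Hy Hy' Hc. destruct (classic (y' = y)) as [H|H]; auto. exfalso.
  pose proof (reach_deg3 y y' Hy Hc H). pose proof (has_degree_unique _ _ _ _ Hy' H0). lia.
Qed.

Lemma reach_deg : forall y x, deg4 y -> reach y x -> exists n, 3 <= n /\ has_degree E x n.
Proof.
  intros y x Hy Hc. destruct (classic (x = y)) as [H|H]; [subst; exists 4; split; auto|].
  exists 3; split; auto. eapply reach_deg3; eauto.
Qed.

Definition nbrs_of (u : V) : list V := epsilon (inhabits []) (fun l => NoDup l /\ forall z, E u z <-> In z l).

Lemma nbrs_of_spec : forall u n, has_degree E u n -> NoDup (nbrs_of u) /\ length (nbrs_of u) = n /\ forall z, E u z <-> In z (nbrs_of u).
Proof.
  intros u n Hd. assert (H : NoDup (nbrs_of u) /\ forall z, E u z <-> In z (nbrs_of u)).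
  { unfold nbrs_of. apply epsilon_spec. destruct Hd as [l [H1 [H2 H3]]]. exists l; auto. }
  destruct H as [H1 H2]. split; [auto|split; [|auto]].
  symmetry. eapply has_degree_unique; eauto. exists (nbrs_of u); auto.
Qed.

Definition neqb (a b : V) : bool := if excluded_middle_informative (a = b) then false else true.
Definition kids (u par : V) : list V := filter (fun z => neqb z par) (nbrs_of u).

Lemma filter_neq_notin : forall (l : list V) a, ~ In a l -> filter (fun z => neqb z a) l = l.
Proof.
  induction l as [|b l IH]; intros a Ha; simpl; auto. unfold neqb at 1. destruct excluded_middle_informative.
  - subst; exfalso; apply Ha; simpl; auto.
  - f_equal; apply IH; intro; apply Ha; simpl; auto.
Qed.

Lemma filter_neq_len : forall (l : list V) a, NoDup l -> In a l -> length (filter (fun z => neqb z a) l) + 1 = length l.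
Proof.
  induction l as [|b l IH]; intros a Hnd Ha; simpl in *; [tauto|]. inversion Hnd; subst.
  unfold neqb at 1. destruct excluded_middle_informative as [E1|E1].
  - subst b. rewrite filter_neq_notin; auto. simpl. lia.
  - simpl. destruct Ha as [Ha|Ha]; [congruence|]. rewrite IH; auto.
Qed.

Lemma kids_in : forall u par z, In z (kids u par) <-> In z (nbrs_of u) /\ z <> par.
Proof.
  intros. unfold kids. rewrite filter_In. unfold neqb. destruct excluded_middle_informative; intuition congruence.
Qed.

(* Descending along an address: the state is (current vertex, its parent),
   and digit i selects the i-th neighbour other than the parent. *)
Definition step (st : V * V) (i : nat) : V * V := (nth i (kids (fst st) (snd st)) (fst st), fst st).
Fixpoint follow (st : V * V) (p : list nat) : V * V :=
  match p with [] => st | i :: r => follow (step st i) r end.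

Lemma follow_snoc : forall p st i, follow st (p ++ [i]) = step (follow st p) i.
Proof. induction p; simpl; auto. Qed.

Variable y : V.
Hypothesis Hy : deg4 y.

Definition state (p : list nat) := follow (y, y) p.
Definition vtx (p : list nat) := fst (state p).
Definition addr (p : list nat) := tree_node 4 p = true.

Lemma addr_pc : forall p i, addr (p ++ [i]) -> addr p.
Proof. unfold addr; intros; eapply tree_node_pc; eauto. Qed.

Lemma addr_digit : forall p i, addr (p ++ [i]) -> (p = [] -> i < 4) /\ (p <> [] -> i < 2).
Proof.
  unfold addr; intros p i H. destruct p as [|j p'].
  - simpl in H. apply andb_true_iff in H. destruct H as [H _]. apply Nat.ltb_lt in H. split; [auto|congruence].
  - rewrite tree_node_app in H by discriminate. apply andb_true_iff in H. destruct H as [_ H]. simpl in H.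
    rewrite andb_true_r in H. apply Nat.ltb_lt in H. split; [discriminate|auto].
Qed.

Lemma addr_snoc : forall p i, addr p -> (p = [] -> i < 4) -> (p <> [] -> i < 2) -> addr (p ++ [i]).
Proof.
  unfold addr; intros p i H H1 H2. destruct p as [|j p'].
  - simpl. rewrite andb_true_r. apply Nat.ltb_lt; auto.
  - rewrite tree_node_app by discriminate. rewrite H. simpl. rewrite andb_true_r. apply Nat.ltb_lt. apply H2; discriminate.
Qed.

Lemma root_not_nbr : ~ In y (nbrs_of y).
Proof. intro H. destruct (nbrs_of_spec y 4 Hy) as [_ [_ H3]]. apply H3 in H. apply (model_irrefl y); auto. Qed.

Lemma kids_root : kids y y = nbrs_of y.
Proof. unfold kids. apply filter_neq_notin, root_not_nbr. Qed.

Lemma follow_spec : forall p, addr p ->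
  reach y (vtx p) /\ (p = [] -> state p = (y, y)) /\
  (p <> [] -> E (vtx p) (snd (state p)) /\ snd (state p) = vtx (removelast p)).
Proof.
  induction p as [|i p IH] using rev_ind; intros Hp.
  - split; [exists 0; constructor|]. split; auto. intros; congruence.
  - assert (Hp0 : addr p) by (eapply addr_pc; eauto). destruct (IH Hp0) as [H1 [H2 H3]].
    unfold vtx, state in *. rewrite follow_snoc. unfold step. simpl.
    set (u := fst (follow (y, y) p)) in *. set (par := snd (follow (y, y) p)) in *.
    destruct (reach_deg y u Hy H1) as [n [Hn Hd]].
    destruct (nbrs_of_spec u n Hd) as [Hnd [Hl Hnb]].
    assert (Hlen : i < length (kids u par)).
    { destruct (addr_digit p i Hp) as [Hi1 Hi2]. destruct p as [|j p'].
      - specialize (H2 eq_refl). unfold u, par in *; rewrite H2; simpl. rewrite kids_root.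
        destruct (nbrs_of_spec y 4 Hy) as [_ [Hl4 _]]. rewrite Hl4. auto.
      - destruct (H3 ltac:(discriminate)) as [HE _]. apply Hnb in HE.
        pose proof (filter_neq_len (nbrs_of u) par Hnd HE). unfold kids. specialize (Hi2 ltac:(discriminate)). lia. }
    assert (Hin : In (nth i (kids u par) u) (kids u par)) by (apply nth_In; auto).
    apply kids_in in Hin. destruct Hin as [Hin Hne]. apply Hnb in Hin.
    split; [|split].
    + destruct H1 as [k Hk]. exists (S k). eapply walk_snoc; eauto.
    + intro E1. destruct p; discriminate.
    + intros _. split; [apply model_sym; auto|]. rewrite removelast_last. auto.
Qed.

Lemma child_facts : forall p i, addr (p ++ [i]) ->
  E (vtx p) (vtx (p ++ [i])) /\ In (vtx (p ++ [i])) (kids (vtx p) (snd (state p))) /\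
  vtx (p ++ [i]) = nth i (kids (vtx p) (snd (state p))) (vtx p) /\ i < length (kids (vtx p) (snd (state p))).
Proof.
  intros p i Hp. pose proof (follow_spec _ Hp) as [_ [_ H3]]. destruct (H3 ltac:(destruct p; discriminate)) as [HE HR].
  rewrite removelast_last in HR. unfold vtx, state in *. rewrite follow_snoc in *. unfold step in *. simpl in *.
  assert (Hlen : i < length (kids (fst (follow (y, y) p)) (snd (follow (y, y) p)))).
  { destruct (le_lt_dec (length (kids (fst (follow (y, y) p)) (snd (follow (y, y) p)))) i); auto.
    exfalso. rewrite nth_overflow in HE; auto. apply (model_irrefl _ HE). }
  split; [apply model_sym; auto|]. split; [apply nth_In; auto|]. split; [reflexivity|auto].
Qed.

Lemma par_eq : forall p, addr p -> p <> [] -> snd (state p) = vtx (removelast p).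
Proof. intros p Hp Hne. apply (follow_spec p Hp); auto. Qed.

Lemma child_ne_par : forall p i, addr (p ++ [i]) -> p <> [] -> vtx (p ++ [i]) <> vtx (removelast p).
Proof.
  intros p i Hp Hne. destruct (child_facts p i Hp) as [_ [Hin _]]. apply kids_in in Hin.
  rewrite par_eq in Hin; [tauto| |auto]. eapply addr_pc; eauto.
Qed.

Inductive nbwalk : list V -> Prop :=
| nbwalk1 : forall x, nbwalk [x]
| nbwalk2 : forall x z, E x z -> nbwalk [x; z]
| nbwalk3 : forall l a b c, nbwalk (l ++ [a; b]) -> E b c -> a <> c -> nbwalk (l ++ [a; b; c]).

Lemma chain_snoc : forall (l : list V) b c, chain E (l ++ [b]) -> E b c -> chain E (l ++ [b; c]).
Proof.
  induction l as [|a l IH]; intros b c H1 H2; simpl in *; [auto|].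
  destruct l as [|a' l]; simpl in *; [tauto|]. destruct H1; split; auto. apply (IH b c); auto.
Qed.

Lemma chain_suffix : forall (A B : list V), chain E (A ++ B) -> chain E B.
Proof.
  induction A as [|a A IH]; intros B H; simpl in *; auto. apply IH.
  destruct (A ++ B) as [|b l]; simpl; auto. tauto.
Qed.

Lemma chain_prefix : forall (A B : list V), chain E (A ++ B) -> chain E A.
Proof.
  induction A as [|a A IH]; intros B H; simpl in *; auto. destruct A as [|a' A]; auto.
  simpl in H. destruct H; split; auto. apply (IH B); auto.
Qed.

Lemma nbwalk_chain : forall l, nbwalk l -> chain E l.
Proof.
  intros l H; induction H; simpl; auto. replace (l ++ [a; b; c]) with ((l ++ [a]) ++ [b; c]) by (rewrite <- app_assoc; auto).
  apply chain_snoc; auto. rewrite <- app_assoc; auto.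
Qed.

Lemma nbwalk_nodup : forall l, nbwalk l -> NoDup l.
Proof.
  intros l H; induction H.
  - repeat constructor; auto.
  - constructor; [|repeat constructor; auto]. intros [H'|[]]; subst; eapply model_irrefl; eauto.
  - assert (Hch : chain E (l ++ [a; b; c])) by (apply nbwalk_chain; constructor; auto).
    replace (l ++ [a; b; c]) with ((l ++ [a; b]) ++ [c]) in * by (rewrite <- app_assoc; auto).
    apply NoDup_app; auto; [repeat constructor; auto|]. intros x Hx [Hxc|[]]; subst x.
    apply in_app_or in Hx. destruct Hx as [Hx|Hx].
    + apply in_split in Hx. destruct Hx as [A [B HAB]]. subst l.
      apply model_acyclic. exists c, (B ++ [a; b]). split; [|split; [|split]].
      * rewrite <- !app_assoc in IHnbwalk. simpl in IHnbwalk. apply NoDup_app_remove_l in IHnbwalk. auto.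
      * rewrite length_app; simpl; lia.
      * rewrite <- !app_assoc in Hch. simpl in Hch. apply (chain_suffix A) in Hch.
        apply (chain_prefix _ [c]). simpl. rewrite <- app_assoc. simpl. auto.
      * replace (B ++ [a; b]) with ((B ++ [a]) ++ [b]) by (rewrite <- app_assoc; auto). rewrite last_last. auto.
    + destruct Hx as [Hx|[Hx|[]]]; subst.
      * congruence.
      * apply (model_irrefl c); auto.
Qed.

Lemma down_exists : forall p, addr p -> exists W1, nbwalk (y :: W1) /\
   (p = [] -> W1 = []) /\ (p <> [] -> exists W0, y :: W1 = W0 ++ [vtx (removelast p); vtx p]).
Proof.
  induction p as [|i p IH] using rev_ind; intros Hp.
  - exists []; split; [constructor|]. split; auto. intros; congruence.
  - assert (Hp0 : addr p) by (eapply addr_pc; eauto). destruct (IH Hp0) as [W1 [Hw [H1 H2]]].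
    destruct (child_facts p i Hp) as [HE _]. rewrite removelast_last.
    destruct p as [|j p'].
    + rewrite (H1 eq_refl) in *. exists [vtx ([] ++ [i])]. split; [constructor; auto|]. split; [intro; destruct i; discriminate|].
      intros _. exists []. auto.
    + destruct (H2 ltac:(discriminate)) as [W0 HW0].
      exists (W1 ++ [vtx ((j :: p') ++ [i])]). split; [|split; [intro E1; destruct p'; discriminate|]].
      * rewrite app_comm_cons, HW0, <- app_assoc. cbn [app]. apply nbwalk3; [rewrite <- HW0; auto|auto|].
        intro E1. apply (child_ne_par (j :: p') i Hp ltac:(discriminate)). auto.
      * intros _. exists (W0 ++ [vtx (removelast (j :: p'))]). rewrite app_comm_cons, HW0, <- !app_assoc. auto.
Qed.

Lemma climb : forall g, addr g -> forall L a b j, nbwalk (L ++ [a; b]) -> addr (g ++ [j]) -> b = vtx (g ++ [j]) ->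
  a <> vtx g -> exists L', nbwalk (L ++ [a; b] ++ L' ++ [y]).
Proof.
  induction g as [|k g IH] using rev_ind; intros Hg L a b j Hw Hgj Hb Ha.
  - exists []. simpl. apply nbwalk3; auto. rewrite Hb. destruct (child_facts [] j Hgj) as [HE _]. apply model_sym; auto.
  - assert (Hg0 : addr g) by (eapply addr_pc; eauto).
    assert (Hw' : nbwalk ((L ++ [a]) ++ [b; vtx (g ++ [k])])).
    { rewrite <- app_assoc. simpl. apply nbwalk3; auto. rewrite Hb. destruct (child_facts _ j Hgj) as [HE _]. apply model_sym; auto. }
    assert (Hbne : b <> vtx g).
    { rewrite Hb. intro E1. pose proof (child_ne_par (g ++ [k]) j Hgj ltac:(destruct g; discriminate)).
      rewrite removelast_last in H. auto. }
    destruct (IH Hg0 (L ++ [a]) b (vtx (g ++ [k])) k Hw' Hg eq_refl Hbne) as [L' HL'].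
    exists (vtx (g ++ [k]) :: L'). rewrite <- app_assoc in HL'. simpl in *. auto.
Qed.

Lemma list_cases : forall (p : list nat), p = [] \/ exists p0 i, p = p0 ++ [i].
Proof. intros p. destruct p as [|j p']; [left; auto|right]. destruct (exists_last (l := j :: p')) as [p0 [i H]]; [discriminate|eauto]. Qed.

Lemma tail_in : forall (W0 W1 : list V) a b, y :: W1 = W0 ++ [a; b] -> In b W1.
Proof.
  intros W0 W1 a b H. destruct W0 as [|w W0']; simpl in H; inversion H; subst; simpl; auto.
  apply in_or_app; simpl; auto.
Qed.

Lemma vtx_snoc : forall p i, vtx (p ++ [i]) = nth i (kids (vtx p) (snd (state p))) (vtx p).
Proof. intros. unfold vtx, state. rewrite follow_snoc. auto. Qed.

Lemma kids_nodup : forall p, addr p -> NoDup (kids (vtx p) (snd (state p))).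
Proof.
  intros p Hp. destruct (follow_spec p Hp) as [Hc _]. destruct (reach_deg y _ Hy Hc) as [n [_ Hd]].
  destruct (nbrs_of_spec _ _ Hd) as [Hnd _]. apply NoDup_filter; auto.
Qed.

Lemma vtx_nonroot : forall q, addr q -> q <> [] -> vtx q <> y.
Proof.
  intros q Hq Hne Hio. destruct (down_exists q Hq) as [W1 [Hw [_ H2]]].
  destruct (H2 Hne) as [W0 HW0]. apply tail_in in HW0. rewrite Hio in HW0.
  apply nbwalk_nodup in Hw. inversion Hw; auto.
Qed.

(* Children of distinct vertices are distinct: otherwise descending to one and
   climbing back from the other would give a non-backtracking walk from y to y. *)
Lemma vtx_children_distinct : forall p0 q0 i j, addr (p0 ++ [i]) -> addr (q0 ++ [j]) ->
  vtx p0 <> vtx q0 -> vtx (p0 ++ [i]) <> vtx (q0 ++ [j]).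
Proof.
  intros p0 q0 i j Hp Hq E0 Heq. assert (Hq0 : addr q0) by (eapply addr_pc; eauto).
  destruct (down_exists (p0 ++ [i]) Hp) as [W1 [Hw [_ H2]]].
  destruct (H2 ltac:(destruct p0; discriminate)) as [W0 HW0]. rewrite removelast_last in HW0.
  rewrite HW0 in Hw.
  destruct (climb q0 Hq0 W0 (vtx p0) (vtx (p0 ++ [i])) j Hw Hq Heq E0) as [L' HL'].
  apply nbwalk_nodup in HL'. rewrite app_assoc, <- HW0 in HL'. simpl in HL'.
  inversion HL'; subst. match goal with H : ~ In y _ |- _ => apply H end.
  apply in_or_app; right. apply in_or_app; right. simpl; auto.
Qed.

Lemma vtx_siblings : forall p0 i j, addr (p0 ++ [i]) -> addr (p0 ++ [j]) ->
  vtx (p0 ++ [i]) = vtx (p0 ++ [j]) -> i = j.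
Proof.
  intros p0 i j Hp Hq Heq. rewrite !vtx_snoc in Heq.
  destruct (child_facts p0 i Hp) as [_ [_ [_ Hi]]]. destruct (child_facts p0 j Hq) as [_ [_ [_ Hj]]].
  eapply (proj1 (NoDup_nth _ (vtx p0))); eauto. apply kids_nodup. eapply addr_pc; eauto.
Qed.

Lemma vtx_inj_n : forall n p q, length p + length q <= n -> addr p -> addr q -> vtx p = vtx q -> p = q.
Proof.
  induction n; intros p q Hn Hp Hq Heq.
  - destruct p, q; simpl in *; auto; lia.
  - destruct (list_cases p) as [Ep|[p0 [i Ep]]]; destruct (list_cases q) as [Eq|[q0 [j Eq]]]; subst.
    + auto.
    + exfalso. apply (vtx_nonroot (q0 ++ [j])); auto. destruct q0; discriminate.
    + exfalso. apply (vtx_nonroot (p0 ++ [i])); auto. destruct p0; discriminate.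
    + assert (Hp0 : addr p0) by (eapply addr_pc; eauto). assert (Hq0 : addr q0) by (eapply addr_pc; eauto).
      rewrite !length_app in Hn; simpl in Hn.
      destruct (classic (vtx p0 = vtx q0)) as [E0|E0].
      * assert (p0 = q0) by (apply IHn; auto; lia). subst q0.
        rewrite (vtx_siblings p0 i j Hp Hq Heq); auto.
      * exfalso. exact (vtx_children_distinct p0 q0 i j Hp Hq E0 Heq).
Qed.

Lemma vtx_inj : forall p q, addr p -> addr q -> vtx p = vtx q -> p = q.
Proof. intros; eapply vtx_inj_n; eauto. Qed.

Definition addr_adj (p q : list nat) := (exists i, q = p ++ [i]) \/ (exists i, p = q ++ [i]).

Lemma nbr_cases : forall p z, addr p -> E (vtx p) z -> exists q, addr q /\ vtx q = z /\ addr_adj p q.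
Proof.
  intros p z Hp HE. destruct (follow_spec p Hp) as [Hc [H2 H3]].
  destruct (reach_deg y _ Hy Hc) as [n [Hn Hd]]. destruct (nbrs_of_spec _ _ Hd) as [Hnd [Hl Hnb]].
  pose proof HE as HE'. apply Hnb in HE'.
  destruct (classic (z = snd (state p))) as [Ez|Ez].
  - destruct (list_cases p) as [Ep|[p0 [k Ep]]].
    + exfalso. subst p. rewrite (H2 eq_refl) in Ez. simpl in Ez. subst z. apply (model_irrefl y); auto.
    + exists p0. subst p. split; [eapply addr_pc; eauto|]. split.
      * rewrite Ez. rewrite par_eq; auto. rewrite removelast_last; auto. destruct p0; discriminate.
      * right; eauto.
  - assert (Hin : In z (kids (vtx p) (snd (state p)))) by (apply kids_in; auto).
    destruct (In_nth _ _ (vtx p) Hin) as [m [Hm Hmz]].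
    exists (p ++ [m]). split; [|split; [rewrite vtx_snoc; auto|left; eauto]].
    apply addr_snoc; auto.
    + intros ->. rewrite (H2 eq_refl) in Hm. cbn [snd] in Hm. change (vtx []) with y in Hm. rewrite kids_root in Hm.
      destruct (nbrs_of_spec y 4 Hy) as [_ [Hl4 _]]. lia.
    + intros Hne. assert (Hu : vtx p <> y).
      { intro Hu. apply Hne. apply vtx_inj; auto. reflexivity. }
      assert (Hd3 : has_degree E (vtx p) 3) by (eapply reach_deg3; eauto).
      pose proof (has_degree_unique _ _ _ _ Hd Hd3). subst n.
      destruct (H3 Hne) as [Hpar _]. apply Hnb in Hpar.
      pose proof (filter_neq_len _ _ Hnd Hpar). unfold kids in Hm. lia.
Qed.

Lemma vtx_adj : forall p q, addr p -> addr q -> addr_adj p q -> E (vtx p) (vtx q).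
Proof.
  intros p q Hp Hq [[i Hi]|[i Hi]]; subst.
  - apply (child_facts p i Hq).
  - apply model_sym. apply (child_facts q i Hp).
Qed.

Lemma vtx_reach : forall p, addr p -> reach y (vtx p).
Proof. intros; apply follow_spec; auto. Qed.
End Tree.


Section Embedding.
Context {V : Type} (E : V -> V -> Prop).
Hypothesis HC : in_class V E.

Lemma next_exists : forall l : list V, exists v, deg4 E v /\ ~ In v l.
Proof.
  intros l. destruct (proj2 (proj2 HC) (S (length l)) ltac:(lia)) as [[L [Hnd [HL Hdeg]]] _].
  apply NNPP. intro Hno. assert (incl L l).
  { intros v Hv. apply NNPP. intro Hn. apply Hno. exists v; split; [apply Hdeg; auto|auto]. }
  pose proof (NoDup_incl_length Hnd H). lia.
Qed.

(* Degree-4 vertices y_0, y_1, ..., chosen pairwise distinct, hence in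
   pairwise distinct components. *)
Definition nextv (l : list V) : V := proj1_sig (constructive_indefinite_description _ (next_exists l)).
Lemma nextv_spec : forall l, deg4 E (nextv l) /\ ~ In (nextv l) l.
Proof. intros; unfold nextv; destruct constructive_indefinite_description; auto. Qed.

Fixpoint ys (n : nat) : list V := match n with 0 => [] | S n => ys n ++ [nextv (ys n)] end.
Definition yv (n : nat) : V := nextv (ys n).

Lemma yv_deg : forall n, deg4 E (yv n).
Proof. intros; apply nextv_spec. Qed.

Lemma yv_in : forall n m, n < m -> In (yv n) (ys m).
Proof.
  intros n m; induction m; intros H; [lia|]. simpl. apply in_or_app.
  destruct (Nat.eq_dec n m); [subst; right; simpl; auto|left; apply IHm; lia].
Qed.

Lemma yv_inj : forall n m, yv n = yv m -> n = m.
Proof.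
  intros n m H. destruct (lt_eq_lt_dec n m) as [[Hl|Hl]|Hl]; auto; exfalso.
  - pose proof (yv_in n m Hl). rewrite H in H0. apply (nextv_spec (ys m)); auto.
  - pose proof (yv_in m n Hl). rewrite <- H in H0. apply (nextv_spec (ys n)); auto.
Qed.

Lemma reach_unique : forall n m x, reach E (yv n) x -> reach E (yv m) x -> n = m.
Proof.
  intros n m x [k Hk] [k' Hk']. apply yv_inj. apply deg4_sep with E; auto using yv_deg.
  exists (k + k'). eapply walk_app; eauto. apply walk_rev; auto. apply model_sym; auto.
Qed.

Definition vtx_in (n : nat) (p : list nat) : V := vtx E (yv n) p.

Definition marked (x : V) := exists np : nat * list nat, addr (snd np) /\ x = vtx_in (fst np) (snd np).

Definition Phi (pi : perm_nat) (x : V) : V :=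
  match excluded_middle_informative (marked x) with
  | left H => let np := proj1_sig (constructive_indefinite_description _ H) in vtx_in (pfun pi (fst np)) (snd np)
  | right _ => x
  end.

Lemma Phi_marked : forall pi n p, addr p -> Phi pi (vtx_in n p) = vtx_in (pfun pi n) p.
Proof.
  intros pi n p Hp. unfold Phi. destruct excluded_middle_informative as [H|H]; [|exfalso; apply H; exists (n, p); auto].
  destruct (constructive_indefinite_description _ H) as [[n' p'] [Hp' Heq]]. simpl in *.
  assert (n' = n).
  { apply (reach_unique n' n (vtx_in n p)).
    - rewrite Heq. apply vtx_reach; auto. apply yv_deg.
    - apply vtx_reach; auto. apply yv_deg. }
  subst n'. assert (p' = p) by (apply (vtx_inj E HC (yv n) (yv_deg n)); auto). subst; auto.
Qed.

Lemma Phi_unmarked : forall pi x, ~ marked x -> Phi pi x = x.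
Proof. intros. unfold Phi. destruct excluded_middle_informative; tauto. Qed.

(* The marked vertices form a union of components. *)
Lemma marked_adj : forall x z, marked x -> E x z ->
  exists n p q, addr p /\ addr q /\ x = vtx_in n p /\ z = vtx_in n q /\ addr_adj p q.
Proof.
  intros x z [[n p] [Hp Hx]] HE. simpl in *. subst x.
  destruct (nbr_cases E HC (yv n) (yv_deg n) p z Hp HE) as [q [Hq [Hio Ht]]].
  exists n, p, q. repeat split; auto.
Qed.

Lemma marked_adj_marked : forall x z, marked x -> E x z -> marked z.
Proof.
  intros x z Hx HE. destruct (marked_adj x z Hx HE) as [n [p [q [_ [Hq [_ [-> _]]]]]]].
  exists (n, q); auto.
Qed.

Definition perm_inv (pi : perm_nat) : perm_nat :=
  {| pfun := pinv pi; pinv := pfun pi; pinv_l := pinv_r pi; pinv_r := pinv_l pi |}.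

Lemma Phi_inv : forall pi x, Phi (perm_inv pi) (Phi pi x) = x.
Proof.
  intros pi x. destruct (classic (marked x)) as [[[n p] [Hp Hx]]|Hn].
  - simpl in *. subst x. rewrite !Phi_marked; auto. simpl. rewrite pinv_l. auto.
  - rewrite (Phi_unmarked pi x Hn). rewrite Phi_unmarked; auto.
Qed.

(* Phi pi preserves adjacency; applied to the inverse permutation, it also
   reflects it. *)
Lemma Phi_preserves : forall pi x z, E x z -> E (Phi pi x) (Phi pi z).
Proof.
  intros pi x z HE. destruct (classic (marked x)) as [Hx|Hx].
  - destruct (marked_adj x z Hx HE) as [n [p [q [Hp [Hq [-> [-> Ht]]]]]]].
    rewrite !Phi_marked; auto. apply (vtx_adj E HC _ (yv_deg _)); auto.
  - assert (Hz : ~ marked z) by (intro Hz; apply Hx, (marked_adj_marked z x Hz), (model_sym E HC); auto).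
    rewrite !Phi_unmarked; auto.
Qed.

Lemma Phi_adj : forall pi x z, E x z <-> E (Phi pi x) (Phi pi z).
Proof.
  intros pi x z. split; [apply Phi_preserves|]. intro HE.
  rewrite <- (Phi_inv pi x), <- (Phi_inv pi z). apply Phi_preserves; auto.
Qed.

Lemma Phi_comp : forall p q x, Phi (perm_comp p q) x = Phi p (Phi q x).
Proof.
  intros p q x. destruct (classic (marked x)) as [[[n r] [Hr Hx]]|Hx].
  - simpl in *. subst x. rewrite !Phi_marked; auto.
  - rewrite (Phi_unmarked q x Hx). rewrite !Phi_unmarked; auto.
Qed.

Theorem embeds : embeds_S_omega V E.
Proof.
  exists Phi. split; [|split].
  - intros pi. split; [|apply Phi_adj].
    exists (Phi (perm_inv pi)). split; [apply Phi_inv|].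
    intro x. exact (Phi_inv (perm_inv pi) x).
  - apply Phi_comp.
  - intros p q H n. specialize (H (vtx_in n [])). rewrite !Phi_marked in H by reflexivity.
    apply yv_inj. exact H.
Qed.
End Embedding.

Theorem lemma5p1 (Gamma : formula -> Prop)
  (Hsent : forall phi, Gamma phi -> sentence phi)
  (Hmod : forall (V : Type) (E : V -> V -> Prop),
            is_model V E Gamma <-> in_class V E) :
  (forall Delta : list formula,
     (forall phi, In phi Delta -> Gamma phi) ->
     exists (V : Type) (E : V -> V -> Prop),
       is_model V E (fun phi => In phi Delta) /\ rigid V E) /\
  (forall (V : Type) (E : V -> V -> Prop),
     is_model V E Gamma -> embeds_S_omega V E).
Proof.
  split.
  - apply rigid_models; auto.
  - intros V E HM. apply embeds. apply Hmod; auto.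
Qed.
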